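(* For every $C>0$ there is $N=N(C)$ such that for every $j\in\mathbb Z$ and every pair of $2$-cells $\sigma_0,\sigma_1$ of $X_j$ with $\mathrm{dist}_{\hat d_\infty}(\pi_j^\infty(\sigma_0),\pi_j^\infty(\sigma_1))\le Cm^{-j}$, there is a horizontal gallery in $X_j$ of combinatorial length at most $N$ that starts at $\sigma_0$ and ends at $\sigma_1$.
   Context: Standing construction ($n=2$). Fix an integer $L\ge100$, $m=4$, $m_v=3L$. For $j\in\mathbb Z$, $Y_j$ is the cell complex on $\mathbb R^2$ given by the tiling by rectangles $[am^{-j},(a+1)m^{-j}]\times[bm_v^{-j},(b+1)m_v^{-j}]$, $a,b\in\mathbb Z$; a $1$-cell is vertical if it is a translate of $\{0\}\times[0,m_v^{-j}]$. Let $\Phi(x,y)=(m^{-1}x,m_v^{-1}y)$. For $k,\ell\in\mathbb Z$, $i\in\{1,2,3\}$, $a_{k,\ell,i}=\{k+\tfrac i4\}\times[(3\ell+i-1)m_v^{-1},(3\ell+i)m_v^{-1}]$. $\mathcal R$ is the equivalence relation on $\mathbb R^2$ generated by $p\sim p+(0,m_v^{-1})$ for $p\in a_{k,\ell,i}$. $\Phi^j_*\mathcal R=\{(\Phi^jp,\Phi^jq):(p,q)\in\mathcal R\}$; $\mathcal R_j$ is generated by $\Phi^i_*\mathcal R$, $i<j$; $\mathcal R_\infty$ by all. For $j\in\mathbb Z\cup\{\infty\}$, $X_j=\mathbb R^2/\mathcal R_j$, $\hat\pi^j$ the quotient map, $\pi_j^\infty$ the induced map; $X_j$ has the CW structure whose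 open cells are images of open cells of $Y_j$, vertical $1$-cells being images of vertical $1$-cells. $\hat d_\infty$ is the largest pseudodistance on $X_\infty$ such that for every $i\in\mathbb Z$ and every $2$-cell $\hat\sigma$ of $Y_i$, $\hat\pi^\infty(\hat\sigma)$ has diameter $\le m^{-i}$. A horizontal gallery in $X_j$ is a sequence of $2$-cells $\sigma_1,\dots,\sigma_\ell$ such that $\sigma_{i-1}\cap\sigma_i$ contains a vertical $1$-cell of $X_j$ for all $1<i\le\ell$; its combinatorial length is $\ell$. *)

From Stdlib Require Import Reals ZArith Arith List Relations.
Open Scope R_scope.

Definition pt : Type := (R * R)%type.

Definition mh : R := 4.
Definition mv (L : nat) : R := 3 * INR L.

Definition Phi_pow (L : nat) (i : Z) (p : pt) : pt :=
  (fst p * powerRZ mh (- i), snd p * powerRZ (mv L) (- i)).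

Definition in_a (L : nat) (k l : Z) (i : nat) (p : pt) : Prop :=
  (1 <= i <= 3)%nat /\
  fst p = IZR k + INR i / 4 /\
  (IZR (3 * l) + INR i - 1) / mv L <= snd p <= (IZR (3 * l) + INR i) / mv L.

Definition R_base (L : nat) (p q : pt) : Prop :=
  exists k l i, in_a L k l i p /\ q = (fst p, snd p + / mv L).

Definition Rrel (L : nat) : relation pt := clos_refl_sym_trans pt (R_base L).

Definition push (L : nat) (i : Z) (p q : pt) : Prop :=
  exists p0 q0, Rrel L p0 q0 /\ p = Phi_pow L i p0 /\ q = Phi_pow L i q0.

Definition Rj (L : nat) (j : Z) : relation pt :=
  clos_refl_sym_trans pt (fun p q => exists i, (i < j)%Z /\ push L i p q).
Definition Rinf (L : nat) : relation pt :=
  clos_refl_sym_trans pt (fun p q => exists i, push L i p q).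

Definition cell2 (L : nat) (j : Z) (c : Z * Z) (p : pt) : Prop :=
  IZR (fst c) * powerRZ mh (- j) <= fst p <= IZR (fst c + 1) * powerRZ mh (- j) /\
  IZR (snd c) * powerRZ (mv L) (- j) <= snd p <= IZR (snd c + 1) * powerRZ (mv L) (- j).

Definition vcell1 (L : nat) (j : Z) (e : Z * Z) (p : pt) : Prop :=
  fst p = IZR (fst e) * powerRZ mh (- j) /\
  IZR (snd e) * powerRZ (mv L) (- j) <= snd p <= IZR (snd e + 1) * powerRZ (mv L) (- j).

(* the point [q] of X_j lies in the image under hat-pi^j of S *)
Definition in_image_Xj (L : nat) (j : Z) (S : pt -> Prop) (q : pt) : Prop :=
  exists p, S p /\ Rj L j p q.

Definition shares_vertical (L : nat) (j : Z) (c c' : Z * Z) : Prop :=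
  exists e, forall q, vcell1 L j e q ->
    in_image_Xj L j (cell2 L j c) q /\ in_image_Xj L j (cell2 L j c') q.

(* horizontal gallery in X_j (list of 2-cells, combinatorial length = length) *)
Definition horizontal_gallery (L : nat) (j : Z) (s : list (Z * Z)) : Prop :=
  s <> nil /\
  forall n, (S n < length s)%nat ->
    shares_vertical L j (nth n s (0%Z, 0%Z)) (nth (S n) s (0%Z, 0%Z)).

(* pseudodistances on X_infty, represented on R^2 and vanishing on R_infty *)
Definition pseudodist_Xinf (L : nat) (d : pt -> pt -> R) : Prop :=
  (forall p, d p p = 0) /\
  (forall p q, 0 <= d p q) /\
  (forall p q, d p q = d q p) /\
  (forall p q r, d p r <= d p q + d q r) /\
  (forall p q, Rinf L p q -> d p q = 0).

Definition admissible (L : nat) (d : pt -> pt -> R) : Prop :=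
  pseudodist_Xinf L d /\
  forall (i : Z) (c : Z * Z) p q,
    cell2 L i c p -> cell2 L i c q -> d p q <= powerRZ mh (- i).

Definition largest_admissible (L : nat) (d : pt -> pt -> R) : Prop :=
  admissible L d /\
  forall d', admissible L d' -> forall p q, d' p q <= d p q.

Definition set_dist_le (d : pt -> pt -> R) (S T : pt -> Prop) (b : R) : Prop :=
  forall eps, 0 < eps -> exists p q, S p /\ T q /\ d p q < b + eps.

From Stdlib Require Import Reals ZArith Arith List Relations Lra Lia Classical.
Open Scope R_scope.

(* The chain pseudodistance (infimum of the costs of chains whose steps either stay in a
   2-cell of some [Y_i], at cost [m^-i], or are free identifications of [Phi^i_* R]) is
   admissible, hence below [hat d_infty]: two cells at distance [<= C m^-j] are joined by
   a chain of cost [< (C+1) m^-j]. Choose [T] with [4^T >= 16 (C+1)] and [n0 = j - T].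
   Steps of level [>= n0] move such a chain horizontally by at most its cost and, by an
   induction over the levels, vertically by at most [m_v^-n0 / 7]. A coarser step cannot
   be a cell, and by uniqueness of 4-adic expansions all coarse steps glue along the same
   line [Phi^i(a_{k,l,i'})]; each of them is a vertical jump by [m_v^-(i+1)], which the
   vertical 1-cells of [X_j] along that line realize, while all remaining displacements
   are bounded in units of cells of [Y_j] and are crossed by galleries of bounded length
   (one row up costs 16 cells, through a gluing of level [j - 1]). *)

Lemma split_first {A} (P : A -> Prop) (l : list A) :
  Forall (fun y => ~ P y) l \/
  exists l1 x l2, l = l1 ++ x :: l2 /\ Forall (fun y => ~ P y) l1 /\ P x.
Proof.
  induction l as [|a l [IH | (l1 & x & l2 & -> & Hl1 & Hx)]].
  - left; constructor.
  - destruct (classic (P a)) as [Ha | Ha].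
    + right; exists nil, a, l; auto.
    + left; constructor; auto.
  - destruct (classic (P a)) as [Ha | Ha].
    + right; exists nil, a, (l1 ++ x :: l2); auto.
    + right; exists (a :: l1), x, l2; auto.
Qed.

Lemma split_last {A} (P : A -> Prop) (l : list A) :
  (exists x, In x l /\ P x) ->
  exists l1 x l2, l = l1 ++ x :: l2 /\ P x /\ Forall (fun y => ~ P y) l2.
Proof.
  induction l as [|x l IH] using rev_ind; [intros (? & [] & _)|].
  intros (y & Hy & Py). destruct (classic (P x)) as [Hx | Hx].
  - exists l, x, nil; auto.
  - apply in_app_or in Hy. destruct Hy as [Hy | [<- | []]]; [|contradiction].
    destruct IH as (l1 & z & l2 & -> & Pz & Hl2); [eauto|].
    exists l1, z, (l2 ++ x :: nil). rewrite <- app_assoc.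
    repeat split; auto. apply Forall_app; auto.
Qed.

Lemma Rabs_le_inv a b : Rabs a <= b -> - b <= a <= b.
Proof. intro h. pose proof (Rle_abs a). pose proof (Rle_abs (- a)). rewrite Rabs_Ropp in *. lra.
Qed.

Lemma Rabs_sub_triang a b c : Rabs (c - a) <= Rabs (c - b) + Rabs (b - a).
Proof.
  replace (c - a) with ((c - b) + (b - a)) by ring. apply Rabs_triang.
Qed.

Definition wid (i : Z) : R := powerRZ mh (- i).

Lemma wid_pos i : 0 < wid i.
Proof. unfold wid, mh. apply powerRZ_lt; lra. Qed.

Lemma wid_succ i : wid (i + 1) = wid i / 4.
Proof.
  unfold wid, mh. replace (- (i + 1))%Z with (- i + - 1)%Z by lia.
  rewrite powerRZ_add by lra. simpl. field.
Qed.

Lemma powerRZ_opp_shift (x : R) (i : Z) (d : nat) :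
  x <> 0 -> powerRZ x (- i) = x ^ d * powerRZ x (- (i + Z.of_nat d)).
Proof. intro hx. rewrite pow_powerRZ, <- powerRZ_add by auto. f_equal. lia. Qed.

Lemma wid_shift i (d : nat) : wid i = 4 ^ d * wid (i + Z.of_nat d).
Proof. apply powerRZ_opp_shift. unfold mh; lra. Qed.

Lemma wid_pow i n : (i <= n)%Z -> wid i = IZR (4 ^ (n - i)) * wid n.
Proof.
  intro h. rewrite (wid_shift i (Z.to_nat (n - i))), Z2Nat.id by lia.
  replace (i + (n - i))%Z with n by lia.
  replace 4 with (IZR 4) at 1 by reflexivity. rewrite pow_IZR, Z2Nat.id by lia. reflexivity.
Qed.

Lemma wid_antitone i n : (i <= n)%Z -> wid n <= wid i.
Proof.
  intro h. rewrite (wid_pow i n h). pose proof (wid_pos n).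
  assert (1 <= IZR (4 ^ (n - i))) by (apply IZR_le; pose proof (Z.pow_pos_nonneg 4 (n - i)); lia).
  nra.
Qed.

Lemma four_adic_unique (k1 k2 i1 i2 : Z) (e1 e2 : nat) : (1 <= i1 <= 3)%Z -> (1 <= i2 <= 3)%Z ->
  ((4 * k1 + i1) * 4 ^ Z.of_nat e1 = (4 * k2 + i2) * 4 ^ Z.of_nat e2)%Z ->
  e1 = e2 /\ k1 = k2 /\ i1 = i2.
Proof.
  assert (key : forall k1 k2 i1 i2 (e f : nat), (1 <= i1 <= 3)%Z -> (1 <= i2 <= 3)%Z ->
            ((4 * k1 + i1) * 4 ^ Z.of_nat e = (4 * k2 + i2) * 4 ^ Z.of_nat (e + f))%Z ->
            f = 0%nat /\ k1 = k2 /\ i1 = i2).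
  { intros a1 a2 b1 b2 e f h1 h2 h. rewrite Nat2Z.inj_add, Z.pow_add_r in h by lia.
    assert (hp : (4 ^ Z.of_nat e > 0)%Z) by (apply Z.lt_gt, Z.pow_pos_nonneg; lia).
    assert (h' : (4 * a1 + b1 = (4 * a2 + b2) * 4 ^ Z.of_nat f)%Z)
      by (apply Z.mul_reg_r with (4 ^ Z.of_nat e)%Z; [lia | rewrite h; ring]).
    destruct f as [|f]; [rewrite Z.pow_0_r, Z.mul_1_r in h'; lia|].
    rewrite Nat2Z.inj_succ, Z.pow_succ_r in h' by lia.
    set (X := ((4 * a2 + b2) * 4 ^ Z.of_nat f)%Z) in *.
    assert (4 * a1 + b1 = 4 * X)%Z by (unfold X in *; lia). lia. }
  intros h1 h2 h. destruct (Nat.le_ge_cases e1 e2).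
  - replace e2 with (e1 + (e2 - e1))%nat in h by lia.
    destruct (key _ _ _ _ _ _ h1 h2 h) as (? & ? & ?). lia.
  - replace e1 with (e2 + (e1 - e2))%nat in h by lia. symmetry in h.
    destruct (key _ _ _ _ _ _ h2 h1 h) as (? & ? & ?). lia.
Qed.

Lemma coarse_column_scaled n0 i k (i' : nat) : (i < n0)%Z ->
  (IZR k + INR i' / 4) * wid i = IZR ((4 * k + Z.of_nat i') * 4 ^ (n0 - i - 1)) * wid n0.
Proof.
  intro h. rewrite (wid_pow i n0) by lia.
  replace (4 ^ (n0 - i))%Z with (4 * 4 ^ (n0 - i - 1))%Z
    by (rewrite <- Z.pow_succ_r by lia; f_equal; lia).
  rewrite !mult_IZR, plus_IZR, mult_IZR, INR_IZR_INZ. field.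
Qed.

(* In units of [m^-n0], the abscissa [(k + i'/4) m^-i] of a line glued at a level
   [i < n0] is the integer [(4k + i') 4^(n0-i-1)], which determines [i], [k] and [i']
   by uniqueness of 4-adic expansions. *)
Lemma coarse_columns_eq n0 i1 i2 k1 k2 (j1 j2 : nat) :
  (i1 < n0)%Z -> (i2 < n0)%Z -> (1 <= j1 <= 3)%nat -> (1 <= j2 <= 3)%nat ->
  Rabs ((IZR k2 + INR j2 / 4) * wid i2 - (IZR k1 + INR j1 / 4) * wid i1) < wid n0 ->
  i1 = i2 /\ k1 = k2 /\ j1 = j2.
Proof.
  intros hi1 hi2 hj1 hj2 h.
  rewrite !(coarse_column_scaled n0) in h by auto.
  rewrite <- Rmult_minus_distr_r, <- minus_IZR, Rabs_mult in h.
  pose proof (wid_pos n0). rewrite (Rabs_right (wid n0)) in h by lra.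
  assert (hz : Rabs (IZR ((4 * k2 + Z.of_nat j2) * 4 ^ (n0 - i2 - 1)
                          - (4 * k1 + Z.of_nat j1) * 4 ^ (n0 - i1 - 1))) < 1)
    by (apply Rmult_lt_reg_r with (wid n0); lra).
  rewrite <- abs_IZR in hz. apply lt_IZR in hz.
  assert (hzz : ((4 * k1 + Z.of_nat j1) * 4 ^ Z.of_nat (Z.to_nat (n0 - i1 - 1))
               = (4 * k2 + Z.of_nat j2) * 4 ^ Z.of_nat (Z.to_nat (n0 - i2 - 1)))%Z)
    by (rewrite !Z2Nat.id by lia; lia).
  apply four_adic_unique in hzz; lia.
Qed.

Lemma index_diff_le (a a' x x' w : R) : 0 < w ->
  a * w <= x <= (a + 1) * w -> a' * w <= x' <= (a' + 1) * w ->
  Rabs (a' - a) <= Rabs (x' - x) / w + 1.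
Proof.
  intros hw [h1 h2] [h3 h4]. apply Rmult_le_reg_r with w; auto.
  replace ((Rabs (x' - x) / w + 1) * w) with (Rabs (x' - x) + w) by (field; lra).
  pose proof (Rle_abs (x' - x)). pose proof (Rle_abs (- (x' - x))). rewrite Rabs_Ropp in *.
  unfold Rabs at 1. destruct (Rcase_abs (a' - a)); nra.
Qed.

Section Construction.

Variable L : nat.

Definition hgt (i : Z) : R := powerRZ (mv L) (- i).

Definition mvZ : Z := 3 * Z.of_nat L.

Lemma IZR_mvZ : IZR mvZ = mv L.
Proof. unfold mvZ, mv. rewrite mult_IZR, <- INR_IZR_INZ. reflexivity. Qed.

Definition glued (i : Z) (a b : pt) : Prop :=
  exists p0 k l (i' : nat), in_a L k l i' p0 /\
    ((a = Phi_pow L i p0 /\ b = Phi_pow L i (fst p0, snd p0 + / mv L)) \/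
     (b = Phi_pow L i p0 /\ a = Phi_pow L i (fst p0, snd p0 + / mv L))).

(* A step of level [i] stays inside one 2-cell of [Y_i] when [is_cell], at cost [m^-i]
   (the diameter bound imposed on admissible pseudodistances); otherwise it is a free
   identification of [Phi^i_* R]. *)
Record step := Step { lev : Z; is_cell : bool; src : pt; tgt : pt }.

Definition step_ok (s : step) : Prop :=
  if is_cell s then exists c, cell2 L (lev s) c (src s) /\ cell2 L (lev s) c (tgt s)
  else glued (lev s) (src s) (tgt s).

Inductive chain : pt -> list step -> pt -> Prop :=
| chain_nil p : chain p nil p
| chain_cons p s l q : src s = p -> step_ok s -> chain (tgt s) l q -> chain p (s :: l) q.

Fixpoint cost (l : list step) : R :=
  match l with
  | nil => 0
  | s :: r => (if is_cell s then wid (lev s) else 0) + cost r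
  end.

Lemma cost_app l1 l2 : cost (l1 ++ l2) = cost l1 + cost l2.
Proof. induction l1; simpl; [|rewrite IHl1]; ring. Qed.

Lemma cost_nonneg l : 0 <= cost l.
Proof. induction l as [|s l IH]; simpl; [lra|].
destruct (is_cell s); pose proof (wid_pos (lev s)); lra. Qed.

Lemma cost_cons_ge r s : cost r <= cost (s :: r).
Proof. simpl. destruct (is_cell s); pose proof (wid_pos (lev s)); lra. Qed.

Lemma cost_ge_cell_step s l : In s l -> is_cell s = true -> wid (lev s) <= cost l.
Proof.
  induction l as [|a l IH]; simpl; [intros []|]. intros [-> | h] hc.
  - rewrite hc. pose proof (cost_nonneg l). lra.
  - pose proof (IH h hc). pose proof (cost_cons_ge l a). simpl in *. lra.
Qed.

Lemma chain_nil_inv p q : chain p nil q -> q = p.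
Proof. now inversion 1. Qed.

Lemma chain_app p l1 r l2 q : chain p l1 r -> chain r l2 q -> chain p (l1 ++ l2) q.
Proof. induction 1; simpl; auto. intro. econstructor; eauto. Qed.

Lemma chain_app_inv p l1 l2 q : chain p (l1 ++ l2) q -> exists r, chain p l1 r /\ chain r l2 q.
Proof.
  revert p. induction l1 as [|s l1 IH]; simpl; intros p H.
  - exists p. split; [constructor | auto].
  - inversion H as [|? ? ? ? hsrc hok hrest]; subst.
    destruct (IH _ hrest) as (r & H1 & H2). exists r. split; [econstructor; eauto | auto].
Qed.

Lemma chain_steps_ok p l q : chain p l q -> Forall step_ok l.
Proof. induction 1; constructor; auto. Qed.

Definition rev_step (s : step) : step := Step (lev s) (is_cell s) (tgt s) (src s).

Lemma step_ok_rev s : step_ok s -> step_ok (rev_step s).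
Proof.
  unfold step_ok, rev_step; simpl. destruct (is_cell s).
  - intros (c & h1 & h2); eauto.
  - intros (p0 & k & l & i' & h & [[e1 e2] | [e1 e2]]); exists p0, k, l, i'; auto.
Qed.

Lemma chain_rev p l q : chain p l q -> exists l', chain q l' p /\ cost l' = cost l.
Proof.
  induction 1 as [p|p s l q hsrc hok _ (l' & h1 & h2)].
  - exists nil. split; [constructor | auto].
  - exists (l' ++ rev_step s :: nil). split.
    + apply chain_app with (tgt s); auto.
      econstructor; [reflexivity | apply step_ok_rev; auto |]. subst p. constructor.
    + rewrite cost_app. simpl. rewrite h2. ring.
Qed.

Lemma cell2_x_close i c a b : cell2 L i c a -> cell2 L i c b -> Rabs (fst b - fst a) <= wid i.
Proof. unfold cell2, wid. rewrite plus_IZR. intros [[h1 h2] _] [[h3 h4] _]. apply Rabs_le. lra. Qed.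

Lemma cell2_y_close i c a b : cell2 L i c a -> cell2 L i c b -> Rabs (snd b - snd a) <= hgt i.
Proof. unfold cell2, hgt. rewrite !plus_IZR. intros [_ [h1 h2]] [_ [h3 h4]]. apply Rabs_le. lra.
Qed.

Lemma glued_x i a b : glued i a b -> fst b = fst a.
Proof. now intros (p0 & k & l & i' & _ & [[-> ->] | [-> ->]]). Qed.

Lemma chain_x_displacement p l q : chain p l q -> Rabs (fst q - fst p) <= cost l.
Proof.
  induction 1 as [p|p s l q <- hok _ IH].
  - rewrite Rminus_diag, Rabs_R0. simpl. lra.
  - simpl. unfold step_ok in hok. destruct (is_cell s).
    + destruct hok as (c & h1 & h2). pose proof (cell2_x_close _ _ _ _ h1 h2).
      pose proof (Rabs_sub_triang (fst (src s)) (fst (tgt s)) (fst q)). lra.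
    + rewrite (glued_x _ _ _ hok) in IH. lra.
Qed.

(* [Phi^n(a_{k,l,i})] together with its translate by one vertical unit [m_v^-(n+1)]:
   the set swept by the points glued at level [n] along [a_{k,l,i}]. *)
Definition near_a (n k l : Z) (i : nat) (z : pt) : Prop :=
  fst z = (IZR k + INR i / 4) * wid n /\
  (IZR (3 * l) + INR i - 1) * (hgt n / mv L) <= snd z <= (IZR (3 * l) + INR i + 1) * (hgt n / mv L).

Definition glues_along (n k l : Z) (i : nat) (x : step) : Prop :=
  lev x = n /\ is_cell x = false /\ near_a n k l i (src x) /\ near_a n k l i (tgt x).

Definition levels_in (n M : Z) (l : list step) : Prop := Forall (fun s => (n <= lev s < M)%Z) l.

Lemma levels_in_app n M l1 l2 : levels_in n M (l1 ++ l2) -> levels_in n M l1 /\ levels_in n M l2.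
Proof. unfold levels_in. rewrite Forall_app. auto. Qed.

Lemma levels_in_succ n M l :
  levels_in n M l -> Forall (fun s => lev s <> n) l -> levels_in (n + 1) M l.
Proof.
  unfold levels_in. rewrite !Forall_forall. intros h1 h2 x hx.
  specialize (h1 x hx). specialize (h2 x hx). lia.
Qed.

Lemma Rrel_free_chain p0 q0 : Rrel L p0 q0 ->
  forall i, exists l, chain (Phi_pow L i p0) l (Phi_pow L i q0) /\ cost l = 0.
Proof.
  induction 1 as [x y (k & l & i' & ha & ->) | x | x y _ IH | x y z _ IH1 _ IH2]; intro i.
  - exists (Step i false (Phi_pow L i x) (Phi_pow L i (fst x, snd x + / mv L)) :: nil).
    split; [|simpl; ring].
    econstructor; [reflexivity | exists x, k, l, i'; auto | constructor].
  - exists nil. split; [constructor | auto].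
  - destruct (IH i) as (l & h1 & h2). destruct (chain_rev _ _ _ h1) as (l' & h3 & h4).
    exists l'. split; auto. lra.
  - destruct (IH1 i) as (l1 & h1 & e1). destruct (IH2 i) as (l2 & h2 & e2).
    exists (l1 ++ l2). split; [eapply chain_app; eauto | rewrite cost_app; lra].
Qed.

Lemma Rinf_free_chain p q : Rinf L p q -> exists l, chain p l q /\ cost l = 0.
Proof.
  induction 1 as [x y (i & p0 & q0 & h & -> & ->) | x | x y _ IH | x y z _ IH1 _ IH2].
  - apply Rrel_free_chain; auto.
  - exists nil. split; [constructor | auto].
  - destruct IH as (l & h1 & h2). destruct (chain_rev _ _ _ h1) as (l' & h3 & h4).
    exists l'. split; auto. lra.
  - destruct IH1 as (l1 & h1 & e1). destruct IH2 as (l2 & h2 & e2).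
    exists (l1 ++ l2). split; [eapply chain_app; eauto | rewrite cost_app; lra].
Qed.

Section ChainDistance.

Variable M0 : R.
Hypothesis M0_nonneg : 0 <= M0.

(* [chain_dist p q = min (M0, inf of the costs of chains from p to q)], written as
   [M0 - sup slack] so that only the completeness of [R] is needed; the truncation
   makes the set bounded and nonempty even when no chain joins [p] and [q]. *)
Definition slack (p q : pt) (r : R) : Prop :=
  r = 0 \/ exists l, chain p l q /\ cost l <= M0 /\ r = M0 - cost l.

Lemma slack_bound p q : bound (slack p q).
Proof.
  exists M0. intros r [-> | (l & _ & _ & ->)]; [lra|]. pose proof (cost_nonneg l). lra.
Qed.

Definition max_slack (p q : pt) : R :=
  proj1_sig (completeness (slack p q) (slack_bound p q) (ex_intro _ 0 (or_introl eq_refl))).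

Lemma max_slack_lub p q : is_lub (slack p q) (max_slack p q).
Proof. unfold max_slack. destruct completeness; simpl; auto. Qed.

Definition chain_dist (p q : pt) : R := M0 - max_slack p q.

Lemma chain_dist_range p q : 0 <= chain_dist p q <= M0.
Proof.
  unfold chain_dist. destruct (max_slack_lub p q) as [ub lub].
  assert (max_slack p q <= M0).
  { apply lub. intros r [-> | (l & _ & _ & ->)]; [lra|]. pose proof (cost_nonneg l). lra. }
  assert (0 <= max_slack p q) by (apply ub; left; auto).
  lra.
Qed.

Lemma chain_dist_le_cost p q l : chain p l q -> chain_dist p q <= cost l.
Proof.
  intro hc. destruct (Rle_lt_dec (cost l) M0).
  - unfold chain_dist. destruct (max_slack_lub p q) as [ub _].
    assert (M0 - cost l <= max_slack p q) by (apply ub; right; eauto). lra.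
  - pose proof (chain_dist_range p q). lra.
Qed.

Lemma chain_dist_approx p q eps : 0 < eps -> chain_dist p q + eps <= M0 ->
  exists l, chain p l q /\ cost l < chain_dist p q + eps.
Proof.
  intros he hle. apply NNPP. intro hn.
  destruct (max_slack_lub p q) as [_ lub]. unfold chain_dist in *.
  assert (max_slack p q <= max_slack p q - eps); [|lra].
  apply lub. intros r [-> | (l & hc & _ & ->)]; [lra|].
  assert (~ cost l < M0 - max_slack p q + eps) by eauto. lra.
Qed.

Lemma chain_dist_sym p q : chain_dist p q = chain_dist q p.
Proof.
  assert (H : forall p q, max_slack q p <= max_slack p q).
  { intros p' q'. destruct (max_slack_lub p' q') as [ub _]. destruct (max_slack_lub q' p') as [_ lub].
    apply lub. intros r [-> | (l & hc & hl & ->)]; apply ub; [left; auto|].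
    destruct (chain_rev _ _ _ hc) as (l' & h1 & h2). right. exists l'. rewrite h2. auto. }
  unfold chain_dist. pose proof (H p q). pose proof (H q p). lra.
Qed.

Lemma chain_dist_triangle p q r : chain_dist p r <= chain_dist p q + chain_dist q r.
Proof.
  pose proof (chain_dist_range p q). pose proof (chain_dist_range q r).
  pose proof (chain_dist_range p r).
  destruct (Rle_lt_dec M0 (chain_dist p q + chain_dist q r)); [lra|].
  apply Rnot_lt_le. intro hlt.
  set (e := Rmin ((chain_dist p r - (chain_dist p q + chain_dist q r)) / 3)
                 ((M0 - (chain_dist p q + chain_dist q r)) / 2)).
  assert (he : 0 < e) by (apply Rmin_pos; lra).
  assert (e <= (chain_dist p r - (chain_dist p q + chain_dist q r)) / 3) by apply Rmin_l.
  assert (e <= (M0 - (chain_dist p q + chain_dist q r)) / 2) by apply Rmin_r.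
  destruct (chain_dist_approx p q e he ltac:(lra)) as (l1 & c1 & hc1).
  destruct (chain_dist_approx q r e he ltac:(lra)) as (l2 & c2 & hc2).
  pose proof (chain_dist_le_cost _ _ _ (chain_app _ _ _ _ _ c1 c2)). rewrite cost_app in *. lra.
Qed.

Lemma chain_dist_admissible : admissible L chain_dist.
Proof.
  split; [split; [|split; [|split; [|split]]]|].
  - intro p. pose proof (chain_dist_range p p).
  pose proof (chain_dist_le_cost p p nil (chain_nil p)).
    simpl in *. lra.
  - intros p q. apply chain_dist_range.
  - intros p q. apply chain_dist_sym.
  - intros p q r. apply chain_dist_triangle.
  - intros p q hr. destruct (Rinf_free_chain p q hr) as (l & hc & e).
    pose proof (chain_dist_le_cost p q l hc). pose proof (chain_dist_range p q). lra.
  - intros i c p q h1 h2.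
    pose proof (chain_dist_le_cost p q (Step i true p q :: nil)) as hh. simpl in hh.
    fold (wid i). rewrite Rplus_0_r in hh. apply hh.
    econstructor; [reflexivity | exists c; auto | constructor].
Qed.

End ChainDistance.

Lemma cheap_chain_of_close_cells d j s0 s1 C : largest_admissible L d -> 0 < C ->
  set_dist_le d (cell2 L j s0) (cell2 L j s1) (C * wid j) ->
  exists p q l, cell2 L j s0 p /\ cell2 L j s1 q /\ chain p l q /\ cost l < (C + 1) * wid j.
Proof.
  intros [_ hmax] hC hd. pose proof (wid_pos j) as hw.
  assert (h0 : 0 <= (C + 1) * wid j) by nra.
  destruct (hd (wid j / 4) ltac:(lra)) as (p & q & hp & hq & hpq).
  pose proof (hmax _ (chain_dist_admissible _ h0) p q).
  pose proof (chain_dist_range _ h0 p q).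
  destruct (chain_dist_approx _ h0 p q (wid j / 4) ltac:(lra) ltac:(lra)) as (l & hc & hcost).
  exists p, q, l. split; [auto | split; [auto | split; [auto | lra]]].
Qed.

Inductive gallery (j : Z) : Z * Z -> Z * Z -> nat -> Prop :=
| gallery_one c : gallery j c c 1
| gallery_cons c c' c'' n : shares_vertical L j c c' -> gallery j c' c'' n -> gallery j c c'' (S n).

Lemma gallery_horizontal j c c' n : gallery j c c' n ->
  exists g, horizontal_gallery L j g /\ length g = n /\
    nth 0 g (0%Z, 0%Z) = c /\ last g (0%Z, 0%Z) = c'.
Proof.
  induction 1 as [c | c c' c'' n hsv _ (g & [hne hg] & hl & h0 & hlast)].
  - exists (c :: nil). split; [split; [congruence | simpl; lia] | auto].
  - destruct g as [|c0 g]; [congruence|]. simpl in h0. subst c0.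
    exists (c :: c' :: g). split; [split|].
    + congruence.
    + intros [|k] hk; simpl; [auto|]. apply (hg k). simpl in *. lia.
    + simpl in *. auto.
Qed.

Definition gallery_within j c c' (N : nat) : Prop := exists n, gallery j c c' n /\ (n <= N)%nat.

Lemma gallery_length_pos j c c' n : gallery j c c' n -> (1 <= n)%nat.
Proof. destruct 1; lia. Qed.

Lemma gallery_trans j c1 c2 c3 n1 n2 :
  gallery j c1 c2 n1 -> gallery j c2 c3 n2 -> gallery j c1 c3 (n1 + n2 - 1).
Proof.
  induction 1 as [c | c c' c'' n hsv h IH]; intro h2.
  - simpl. rewrite Nat.sub_0_r. auto.
  - pose proof (gallery_length_pos _ _ _ _ h).
    replace (S n + n2 - 1)%nat with (S (n + n2 - 1)) by lia. econstructor; eauto.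
Qed.

Lemma gallery_within_trans j c1 c2 c3 N1 N2 :
  gallery_within j c1 c2 N1 -> gallery_within j c2 c3 N2 -> gallery_within j c1 c3 (N1 + N2).
Proof.
  intros (n1 & h1 & e1) (n2 & h2 & e2). exists (n1 + n2 - 1)%nat.
  split; [eapply gallery_trans; eauto | lia].
Qed.

Lemma gallery_within_mono j c c' N N' : gallery_within j c c' N -> (N <= N')%nat -> gallery_within j c c' N'.
Proof. intros (n & h & e) hN. exists n. split; auto. lia. Qed.

Lemma gallery_within_refl j c : gallery_within j c c 1.
Proof. exists 1%nat. split; [constructor | lia]. Qed.

Lemma shares_vertical_sym j c c' : shares_vertical L j c c' -> shares_vertical L j c' c.
Proof. intros [e h]. exists e. intros q hq. destruct (h q hq); split; auto. Qed.

Lemma gallery_snoc j c c' c'' n : gallery j c c' n -> shares_vertical L j c' c'' -> gallery j c c'' (S n).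
Proof. induction 1; intro h; econstructor; eauto; constructor. Qed.

Lemma gallery_within_sym j c c' N : gallery_within j c c' N -> gallery_within j c' c N.
Proof.
  intros (n & h & e). exists n. split; auto. clear e.
  induction h; [constructor | eapply gallery_snoc; eauto using shares_vertical_sym].
Qed.

Lemma shares_vertical_within j c c' : shares_vertical L j c c' -> gallery_within j c c' 2.
Proof. intro h. exists 2%nat. split; [econstructor; eauto; constructor | lia]. Qed.

Lemma shares_vertical_right j a b : shares_vertical L j (a, b) ((a + 1)%Z, b).
Proof.
  exists ((a + 1)%Z, b). intros q [hx hy]. simpl in *. pose proof (wid_pos j) as hw.
  unfold wid in hw.
  split; exists q; (split; [|apply rst_refl]); unfold cell2; simpl; rewrite ?plus_IZR in *; split; lra.
Qed.

Lemma gallery_within_row j a a' b : gallery_within j (a, b) (a', b) (2 * Z.to_nat (Z.abs (a' - a)) + 1).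
Proof.
  assert (H : forall (d : nat) a, gallery_within j (a, b) ((a + Z.of_nat d)%Z, b) (2 * d + 1)).
  { induction d as [|d IH]; intro a0.
    - rewrite Z.add_0_r. apply gallery_within_refl.
    - replace (2 * S d + 1)%nat with (2 + (2 * d + 1))%nat by lia.
      apply gallery_within_trans with ((a0 + 1)%Z, b); [apply shares_vertical_within, shares_vertical_right|].
      replace (a0 + Z.of_nat (S d))%Z with ((a0 + 1) + Z.of_nat d)%Z by lia. apply IH. }
  destruct (Z_le_gt_dec a a').
  - replace a' with (a + Z.of_nat (Z.to_nat (Z.abs (a' - a))))%Z at 1 by lia. apply H.
  - apply gallery_within_sym.
  replace a with (a' + Z.of_nat (Z.to_nat (Z.abs (a' - a))))%Z at 1 by lia.
    apply H.
Qed.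

Section LargeL.

Hypothesis L_ge_100 : (100 <= L)%nat.

Lemma mv_ge_300 : 300 <= mv L.
Proof. unfold mv. apply le_INR in L_ge_100. simpl in L_ge_100. lra. Qed.

Lemma hgt_pos i : 0 < hgt i.
Proof. unfold hgt. apply powerRZ_lt. pose proof mv_ge_300; lra. Qed.

Lemma hgt_succ i : hgt (i + 1) = hgt i / mv L.
Proof.
  pose proof mv_ge_300. unfold hgt. replace (- (i + 1))%Z with (- i + - 1)%Z by lia.
  rewrite powerRZ_add by lra. simpl. field. lra.
Qed.

Lemma hgt_shift i (d : nat) : hgt i = mv L ^ d * hgt (i + Z.of_nat d).
Proof. apply powerRZ_opp_shift. pose proof mv_ge_300; lra. Qed.

Lemma hgt_pow i n : (i <= n)%Z -> hgt i = IZR (mvZ ^ (n - i)) * hgt n.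
Proof.
  intro h. rewrite (hgt_shift i (Z.to_nat (n - i))), Z2Nat.id by lia.
  replace (i + (n - i))%Z with n by lia.
  rewrite <- IZR_mvZ, pow_IZR, Z2Nat.id by lia. reflexivity.
Qed.

Lemma hgt_antitone i n : (i <= n)%Z -> hgt n <= hgt i.
Proof.
  intro h. rewrite (hgt_pow i n h). pose proof (hgt_pos n).
  assert (1 <= IZR (mvZ ^ (n - i))).
  { apply IZR_le. pose proof (Z.pow_pos_nonneg mvZ (n - i)). unfold mvZ in *. lia. }
  nra.
Qed.

Lemma glued_near_a i a b : glued i a b ->
  exists k l i', (1 <= i' <= 3)%nat /\ near_a i k l i' a /\ near_a i k l i' b /\
    (snd b = snd a + hgt i / mv L \/ snd b = snd a - hgt i / mv L).
Proof.
  intros (p0 & k & l & i' & (hi & hx & hy1 & hy2) & hab).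
  pose proof mv_ge_300 as hm. pose proof (hgt_pos i) as hp.
  set (X := IZR (3 * l) + INR i') in *.
  assert (e1 : snd p0 * hgt i - (X - 1) * (hgt i / mv L) = (snd p0 - (X - 1) / mv L) * hgt i)
    by (field; lra).
  assert (e2 : (X + 1) * (hgt i / mv L) - (snd p0 * hgt i + hgt i / mv L) = (X / mv L - snd p0) * hgt i)
    by (field; lra).
  assert (0 <= (snd p0 - (X - 1) / mv L) * hgt i) by (apply Rmult_le_pos; lra).
  assert (0 <= (X / mv L - snd p0) * hgt i) by (apply Rmult_le_pos; lra).
  assert (0 < hgt i / mv L) by (apply Rdiv_lt_0_compat; lra).
  assert (ey : (snd p0 + / mv L) * hgt i = snd p0 * hgt i + hgt i / mv L) by (field; lra).
  exists k, l, i'. split; auto. unfold near_a. fold X.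
  destruct hab as [[-> ->] | [-> ->]]; unfold Phi_pow; cbn [fst snd]; fold (wid i) (hgt i);
    rewrite ?ey, hx; repeat split; lra.
Qed.

Lemma near_a_y_close n k l i a b : near_a n k l i a -> near_a n k l i b ->
  Rabs (snd b - snd a) <= 2 * (hgt n / mv L).
Proof. intros [_ [h1 h2]] [_ [h3 h4]]. apply Rabs_le. lra. Qed.

Lemma near_a_separated n k l i k2 l2 i2 a b :
  (1 <= i <= 3)%nat -> (1 <= i2 <= 3)%nat ->
  near_a n k l i a -> near_a n k2 l2 i2 b -> ~ (k = k2 /\ l = l2 /\ i = i2) ->
  wid n / 4 <= Rabs (fst b - fst a) \/ hgt n / mv L <= Rabs (snd b - snd a).
Proof.
  intros hi hi2 [ax [ay1 ay2]] [bx [by1 by2]] hne.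
  pose proof mv_ge_300. pose proof (hgt_pos n). pose proof (wid_pos n).
  assert (hu : 0 < hgt n / mv L) by (apply Rdiv_lt_0_compat; lra).
  rewrite !INR_IZR_INZ in *.
  destruct (Z.eq_dec (4 * k + Z.of_nat i) (4 * k2 + Z.of_nat i2)) as [e | e].
  - assert (k = k2 /\ i = i2) as [<- <-] by lia.
    assert (l <> l2) by tauto. right.
    destruct (Z_lt_le_dec l l2).
    + assert (IZR (3 * l) + 3 <= IZR (3 * l2)) by (rewrite <- plus_IZR; apply IZR_le; lia).
      assert (snd b - snd a >= hgt n / mv L) by nra. rewrite Rabs_right; lra.
    + assert (IZR (3 * l2) + 3 <= IZR (3 * l)) by (rewrite <- plus_IZR; apply IZR_le; lia).
      assert (snd a - snd b >= hgt n / mv L) by nra. rewrite Rabs_minus_sym, Rabs_right; lra.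
  - left. rewrite ax, bx.
    replace ((IZR k2 + IZR (Z.of_nat i2) / 4) * wid n - (IZR k + IZR (Z.of_nat i) / 4) * wid n)
      with (IZR ((4 * k2 + Z.of_nat i2) - (4 * k + Z.of_nat i)) * (wid n / 4))
      by (rewrite minus_IZR, !plus_IZR, !mult_IZR; field).
    rewrite Rabs_mult, (Rabs_right (wid n / 4)) by lra.
    assert (1 <= Rabs (IZR (4 * k2 + Z.of_nat i2 - (4 * k + Z.of_nat i))))
      by (rewrite <- abs_IZR; apply IZR_le; lia).
    nra.
Qed.

Definition y_bound (n : Z) (c : R) : R := 3 * hgt n / mv L + 2 * (hgt n / wid n) * c.

(* From the bound for levels [> n] to levels [>= n]: cut a chain at its level-[n] steps.
   A level-[n] cell moves it by [m_v^-n] and is paid for by its cost [m^-n]; successive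
   level-[n] gluings along one [a_{k,l,i}] move it by two units [m_v^-(n+1)] at most; and
   the finer piece between gluings along distinct lines costs at least [m^-n / 16]. *)
Section OneLevel.

Variables n M : Z.

Let u := hgt n / mv L.
Let w := wid n.
Let rho := u / w.

Hypothesis finer_y_bound : forall p l q,
  chain p l q -> levels_in (n + 1) M l -> Rabs (snd q - snd p) <= y_bound (n + 1) (cost l).

Lemma level_scales : 300 <= mv L /\ 0 < u /\ 0 < w /\ 0 < rho /\ rho * w = u /\
  hgt n = mv L * u /\ hgt n / wid n = mv L * rho.
Proof.
  pose proof mv_ge_300. pose proof (hgt_pos n). pose proof (wid_pos n).
  assert (0 < u) by (apply Rdiv_lt_0_compat; lra).
  assert (0 < rho) by (apply Rdiv_lt_0_compat; unfold w; lra).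
  unfold rho, w, u in *. repeat split; auto; field; lra.
Qed.

Lemma finer_y_bound_scaled p l q : chain p l q -> levels_in (n + 1) M l ->
  Rabs (snd q - snd p) <= 3 / mv L * u + 8 * rho * cost l.
Proof.
  intros h1 h2. pose proof (finer_y_bound p l q h1 h2) as h.
  unfold y_bound in h. rewrite hgt_succ, wid_succ in h.
  pose proof mv_ge_300. pose proof (wid_pos n).
  replace (3 / mv L * u + 8 * rho * cost l)
    with (3 * (hgt n / mv L) / mv L + 2 * (hgt n / mv L / (wid n / 4)) * cost l)
    by (unfold rho, u, w; field; lra).
  exact h.
Qed.

Lemma finer_coefficient_le c : 0 <= c -> 8 * rho * c <= 2 * (hgt n / wid n) * c.
Proof.
  intro hc. pose proof level_scales as (hm & _ & _ & hrho & _ & _ & ->).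
  assert (0 <= rho * c) by (apply Rmult_le_pos; lra). nra.
Qed.

(* The bonus is a potential: it lets a block starting at level [n] absorb the
   additive constant of the finer block preceding it. *)
Definition bonus (l : list step) : R :=
  match l with
  | nil => 0
  | s :: _ => if Z.eq_dec (lev s) n then (if is_cell s then hgt n else 3 / mv L * u) else 0
  end.

Definition budget (l : list step) : R :=
  (2 + 6 / mv L) * u + 2 * (hgt n / wid n) * cost l - bonus l.

Definition budget_holds (l : list step) : Prop :=
  forall p q, chain p l q -> levels_in n M l -> Rabs (snd q - snd p) <= budget l.

Lemma bonus_level_n s r : lev s = n -> 3 / mv L * u <= bonus (s :: r).
Proof.
  intro e. pose proof level_scales as (hm & hu & _ & _ & _ & hn & _).
  assert (3 / mv L <= 1) by (apply Rmult_le_reg_r with (mv L); [lra | field_simplify; lra]).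
  simpl. destruct (Z.eq_dec (lev s) n); [|contradiction]. destruct (is_cell s); nra.
Qed.

Lemma bonus_nonneg l : 0 <= bonus l.
Proof.
  pose proof level_scales as (hm & hu & _).
  assert (0 <= 3 / mv L * u) by (apply Rmult_le_pos; [apply Rlt_le, Rdiv_lt_0_compat|]; lra).
  destruct l as [|s r]; simpl; [lra|].
  destruct (Z.eq_dec (lev s) n) as [e|]; [|lra]. pose proof (bonus_level_n s r e). simpl in *.
  destruct (Z.eq_dec (lev s) n); [lra | contradiction].
Qed.

Lemma budget_nil : budget_holds nil.
Proof.
  intros p q h _. apply chain_nil_inv in h. subst q.
  pose proof level_scales as (hm & hu & _). unfold budget. simpl.
  rewrite Rminus_diag, Rabs_R0.
  assert (0 < 6 / mv L) by (apply Rdiv_lt_0_compat; lra). nra.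
Qed.

Lemma budget_cons_cell s r : lev s = n -> is_cell s = true -> budget_holds r -> budget_holds (s :: r).
Proof.
  intros en ec IH p q hch hlv.
  inversion hch as [|? ? ? ? <- hok hr]; subst.
  unfold step_ok in hok. rewrite ec, en in hok. destruct hok as (c & h1 & h2).
  pose proof (cell2_y_close _ _ _ _ h1 h2) as hdy.
  pose proof (IH _ _ hr (Forall_inv_tail hlv)) as hr'.
  pose proof (bonus_nonneg r). pose proof (wid_pos n).
  pose proof (Rabs_sub_triang (snd (src s)) (snd (tgt s)) (snd q)).
  assert (e : hgt n / wid n * (wid n + cost r) = hgt n + hgt n / wid n * cost r) by (field; lra).
  unfold budget in *. simpl. rewrite ec, en. destruct (Z.eq_dec n n); [|congruence].
  lra.
Qed.

Lemma budget_cons_finer s r : lev s <> n ->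
  (forall l, (length l <= length r)%nat -> budget_holds l) -> budget_holds (s :: r).
Proof.
  intros ne IH p q hch hlv.
  pose proof level_scales as (hm & hu & hw & hrho & _ & _ & hratio).
  pose proof finer_coefficient_le as h8.
  assert (hb0 : bonus (s :: r) = 0)
    by (simpl; destruct (Z.eq_dec (lev s) n); [contradiction | reflexivity]).
  unfold budget. rewrite hb0.
  assert (3 / mv L * u <= (2 + 6 / mv L) * u).
  { assert (0 < 3 / mv L) by (apply Rdiv_lt_0_compat; lra).
    replace (6 / mv L) with (2 * (3 / mv L)) by (field; lra). nra. }
  destruct (split_first (fun x => lev x = n) (s :: r)) as [allf | (a & sg & b & e & fa & en)].
  - pose proof (finer_y_bound_scaled _ _ _ hch (levels_in_succ _ _ _ hlv allf)).
    pose proof (h8 _ (cost_nonneg (s :: r))). lra.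
  - destruct a as [|a0 a']; [injection e; intros; subst; contradiction|].
    rewrite e in hch, hlv. apply chain_app_inv in hch as (z & ha & hb).
    apply levels_in_app in hlv as [hla hlb].
    pose proof (finer_y_bound_scaled _ _ _ ha (levels_in_succ _ _ _ hla fa)).
    assert (hlen : (length (sg :: b) <= length r)%nat)
      by (apply (f_equal (@length _)) in e; rewrite length_app in e; simpl in *; lia).
    pose proof (IH _ hlen _ _ hb hlb). unfold budget in *.
    pose proof (bonus_level_n sg b en).
    pose proof (h8 _ (cost_nonneg (a0 :: a'))).
    assert (hc : cost (s :: r) = cost (a0 :: a') + cost (sg :: b)) by (rewrite e, cost_app; ring).
    rewrite hc. pose proof (Rabs_sub_triang (snd p) (snd z) (snd q)). lra.
Qed.

Lemma finer_cost_between_regions k l i k2 l2 i2 z a z' :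
  (1 <= i <= 3)%nat -> (1 <= i2 <= 3)%nat -> ~ (k = k2 /\ l = l2 /\ i = i2) ->
  near_a n k l i z -> near_a n k2 l2 i2 z' ->
  chain z a z' -> levels_in (n + 1) M a -> w / 16 <= cost a.
Proof.
  intros hi hi2 hne hz hz' hch hlv.
  pose proof level_scales as (hm & hu & hw & hrho & hrw & _).
  destruct (near_a_separated _ _ _ _ _ _ _ _ _ hi hi2 hz hz' hne) as [hx | hy].
  - pose proof (chain_x_displacement _ _ _ hch). pose proof (wid_pos n). unfold w. lra.
  - fold u in hy. pose proof (finer_y_bound_scaled _ _ _ hch hlv).
    assert (3 / mv L <= 1 / 100) by (apply Rmult_le_reg_r with (mv L); [lra | field_simplify; lra]).
    assert (u / 16 <= rho * cost a) by nra.
    apply Rmult_le_reg_l with rho; [lra|]. nra.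
Qed.

Lemma leaving_region_y_bound k0 l0 i0 len :
  (1 <= i0 <= 3)%nat -> (forall l, (length l <= len)%nat -> budget_holds l) ->
  forall z l q, (length l <= len)%nat -> chain z l q -> levels_in n M l ->
  near_a n k0 l0 i0 z -> Forall (fun x => ~ glues_along n k0 l0 i0 x) l ->
  Rabs (snd q - snd z) <= 3 / mv L * u + 2 * (hgt n / wid n) * cost l.
Proof.
  intros hi0 IH z l q hlen hch hlv hz hout.
  pose proof level_scales as (hm & hu & hw & hrho & hrw & hn & hratio).
  pose proof finer_coefficient_le as h8.
  destruct (split_first (fun x => lev x = n) l) as [allf | (a & sg & b & -> & fa & en)].
  { pose proof (finer_y_bound_scaled _ _ _ hch (levels_in_succ _ _ _ hlv allf)).
    pose proof (h8 _ (cost_nonneg l)). lra. }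
  apply chain_app_inv in hch as (z' & ha & hb). apply levels_in_app in hlv as [hla hlb].
  pose proof (finer_y_bound_scaled _ _ _ ha (levels_in_succ _ _ _ hla fa)).
  rewrite length_app in hlen.
  pose proof (IH (sg :: b) ltac:(simpl in *; lia) _ _ hb hlb) as hsg. unfold budget in hsg.
  rewrite cost_app.
  pose proof (cost_nonneg a). pose proof (cost_nonneg (sg :: b)).
  pose proof (Rabs_sub_triang (snd z) (snd z') (snd q)).
  assert (6 / mv L = 2 * (3 / mv L)) by (field; lra).
  assert (3 / mv L <= 1 / 100) by (apply Rmult_le_reg_r with (mv L); [lra | field_simplify; lra]).
  assert (0 < 3 / mv L) by (apply Rdiv_lt_0_compat; lra).
  pose proof (h8 _ (cost_nonneg a)).
  destruct (is_cell sg) eqn:ec.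
  - assert (bonus (sg :: b) = hgt n)
      by (simpl; destruct (Z.eq_dec (lev sg) n); [rewrite ec; auto | contradiction]).
    nra.
  - inversion hb as [|? ? ? ? hsrc hok _]; subst z'.
    unfold step_ok in hok. rewrite ec, en in hok.
    destruct (glued_near_a _ _ _ hok) as (k2 & l2 & i2 & hi2 & hsa & hsb & _).
    assert (hne : ~ (k0 = k2 /\ l0 = l2 /\ i0 = i2)).
    { intros (<- & <- & <-). rewrite Forall_app in hout. destruct hout as [_ hout].
      apply (Forall_inv hout). unfold glues_along. auto. }
    pose proof (finer_cost_between_regions _ _ _ _ _ _ _ _ _ hi0 hi2 hne hz hsa ha
                  (levels_in_succ _ _ _ hla fa)).
    pose proof (bonus_level_n sg b en).
    assert (2 * (hgt n / wid n) * cost a - 8 * rho * cost a >= 37 * u).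
    { rewrite hratio. assert (rho * cost a >= u / 16) by (unfold w in *; nra). nra. }
    nra.
Qed.

Lemma budget_cons_glue s r : lev s = n -> is_cell s = false ->
  (forall l, (length l <= length r)%nat -> budget_holds l) -> budget_holds (s :: r).
Proof.
  intros en ec IH p q hch hlv.
  pose proof level_scales as (hm & hu & hw & hrho & _ & _ & hratio).
  inversion hch as [|? ? ? ? <- hok _]; subst.
  unfold step_ok in hok. rewrite ec, en in hok.
  destruct (glued_near_a _ _ _ hok) as (k0 & l0 & i0 & hi0 & hsrc & htgt & _).
  destruct (split_last (glues_along n k0 l0 i0) (s :: r)) as (pre & g2 & ch3 & e & hg2 & hout).
  { exists s. split; [left; auto | unfold glues_along; auto]. }
  rewrite e in hch, hlv. apply chain_app_inv in hch as (z & _ & hg).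
  inversion hg as [|? ? ? ? _ _ h3]; subst.
  apply levels_in_app in hlv as [_ hlv3].
  destruct hg2 as (_ & _ & _ & hg2).
  pose proof (near_a_y_close _ _ _ _ _ _ hsrc hg2) as hy1. fold u in hy1.
  assert (hlen : (length ch3 <= length r)%nat).
  { apply (f_equal (@length _)) in e. rewrite length_app in e. simpl in e. lia. }
  pose proof (leaving_region_y_bound _ _ _ _ hi0 IH _ _ _ hlen h3 (Forall_inv_tail hlv3) hg2 hout).
  assert (hc : cost ch3 <= cost (s :: r)).
  { rewrite e, cost_app. pose proof (cost_nonneg pre). pose proof (cost_cons_ge ch3 g2). lra. }
  assert (hb : bonus (s :: r) = 3 / mv L * u)
    by (simpl; destruct (Z.eq_dec (lev s) n); [rewrite ec; auto | contradiction]).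
  assert (0 <= hgt n / wid n) by (rewrite hratio; nra).
  pose proof (Rabs_sub_triang (snd (src s)) (snd (tgt g2)) (snd q)).
  assert (6 / mv L = 2 * (3 / mv L)) by (field; lra).
  unfold budget. rewrite hb. nra.
Qed.

Lemma budget_holds_all l : budget_holds l.
Proof.
  assert (H : forall len l, (length l <= len)%nat -> budget_holds l).
  { induction len as [|len IH]; intros [|s r] hl; try apply budget_nil; [simpl in hl; lia|].
    assert (IHr : forall l, (length l <= length r)%nat -> budget_holds l)
      by (intros l' hl'; apply IH; simpl in hl; lia).
    destruct (Z.eq_dec (lev s) n) as [en | ne]; [|apply budget_cons_finer; auto].
    destruct (is_cell s) eqn:ec.
    - apply budget_cons_cell, IHr; auto.
    - apply budget_cons_glue; auto. }
  exact (H _ l (le_n _)).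
Qed.

Lemma y_bound_down p l q : chain p l q -> levels_in n M l -> Rabs (snd q - snd p) <= y_bound n (cost l).
Proof.
  intros hch hlv. pose proof (budget_holds_all l p q hch hlv) as h.
  pose proof level_scales as (hm & hu & _ & _ & _ & hn & _). pose proof (bonus_nonneg l).
  assert ((2 + 6 / mv L) * u <= 3 * hgt n / mv L).
  { rewrite hn. replace (3 * (mv L * u) / mv L) with (3 * u) by (field; lra).
    assert (6 / mv L <= 1) by (apply Rmult_le_reg_r with (mv L); [lra | field_simplify; lra]). nra.
    }
  unfold budget, y_bound in *. lra.
Qed.

End OneLevel.

Lemma chain_y_displacement_between n M p l q : chain p l q -> levels_in n M l ->
  Rabs (snd q - snd p) <= y_bound n (cost l).
Proof.
  remember (Z.to_nat (M - n)) as k eqn:ek. revert n ek p l q.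
  induction k as [|k IH]; intros n ek p l q hch hlv.
  - destruct l as [|s r].
    + apply chain_nil_inv in hch. subst q. rewrite Rminus_diag, Rabs_R0.
      pose proof mv_ge_300. pose proof (hgt_pos n). pose proof (wid_pos n).
      unfold y_bound. simpl.
      assert (0 < 3 * hgt n / mv L) by (apply Rdiv_lt_0_compat; lra). lra.
    + inversion hlv as [|? ? hs _]. lia.
  - apply (y_bound_down n M); auto. intros. apply (IH (n + 1)%Z); auto. lia.
Qed.

Lemma chain_y_displacement n p l q : chain p l q -> Forall (fun s => (n <= lev s)%Z) l ->
  Rabs (snd q - snd p) <= y_bound n (cost l).
Proof.
  intros hch hf.
  set (M := (fold_right (fun s m => Z.max (lev s + 1) m) n l)).
  apply (chain_y_displacement_between n M); auto.
  assert (hM : Forall (fun s => (lev s < M)%Z) l).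
  { unfold M. clear. induction l as [|s l IH]; constructor; simpl; [lia|].
    eapply Forall_impl; [|exact IH]. simpl. intros. lia. }
  unfold levels_in. rewrite Forall_forall in *. intros x hx. specialize (hf x hx).
  specialize (hM x hx). lia.
Qed.

(* The vertical 1-cell at [x = a0 m^-j] over row [r] lies on [Phi^i(a_{k,l,i'})], whose
   glued partner, [m_v^-(i+1) = J m_v^-j] higher, lies on the boundary of cell
   [(a0, r + J)]. *)
Lemma shares_vertical_jump j i k l (i' : nat) a0 r J : (i < j)%Z -> (1 <= i' <= 3)%nat ->
  IZR a0 * wid j = (IZR k + INR i' / 4) * wid i ->
  IZR J * hgt j = hgt i / mv L ->
  (IZR (3 * l) + INR i' - 1) * (hgt i / mv L) <= IZR r * hgt j ->
  IZR (r + 1) * hgt j <= (IZR (3 * l) + INR i') * (hgt i / mv L) ->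
  shares_vertical L j ((a0 - 1)%Z, r) (a0, (r + J)%Z).
Proof.
  intros hij hi ha hJ hlo hhi.
  pose proof (wid_pos j). pose proof (hgt_pos j). pose proof (hgt_pos i). pose proof mv_ge_300.
  exists (a0, r). intros q [hx hy]. simpl in hx, hy. fold (wid j) in hx. fold (hgt j) in hy.
  split.
  - exists q. split; [|apply rst_refl]. unfold cell2; simpl. fold (wid j) (hgt j).
    rewrite minus_IZR, Z.sub_add. lra.
  - exists (fst q, snd q + hgt i / mv L). split.
    + unfold cell2; simpl. fold (wid j) (hgt j). rewrite !plus_IZR in *. lra.
    + apply rst_sym, rst_step. exists i. split; auto.
      exists (IZR k + INR i' / 4, snd q / hgt i), (IZR k + INR i' / 4, snd q / hgt i + / mv L).
      split; [|split].
      * apply rst_step. exists k, l, i'. split; [|reflexivity]. split; auto. split; [reflexivity|].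
        cbn [fst snd].
        assert (e1 : (IZR (3 * l) + INR i' - 1) / mv L
                     = (IZR (3 * l) + INR i' - 1) * (hgt i / mv L) / hgt i) by (field; lra).
        assert (e2 : (IZR (3 * l) + INR i') / mv L
                     = (IZR (3 * l) + INR i') * (hgt i / mv L) / hgt i) by (field; lra).
        rewrite e1, e2.
        split; apply Rmult_le_compat_r; try (apply Rlt_le, Rinv_0_lt_compat; lra); lra.
      * destruct q as [qx qy]. unfold Phi_pow; simpl in *. fold (wid i) (hgt i).
      f_equal; [lra | field; lra].
      * destruct q as [qx qy]. unfold Phi_pow; simpl in *. fold (wid i) (hgt i).
      f_equal; [lra | field; lra].
Qed.

(* One row up: walk right to the column of [Phi^(j-1)(a_{k,l,i'})] with [i'] chosen
   from [b mod 3], cross the jump of height exactly one row, and walk back. *)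
Lemma gallery_within_up j a b : gallery_within j (a, b) (a, (b + 1)%Z) 16.
Proof.
  set (i' := (Z.to_nat (b mod 3) + 1)%nat). set (l := (b / 3)%Z). set (k := (a / 4)%Z).
  set (a0 := (4 * k + Z.of_nat i')%Z).
  assert (hb3 : (0 <= b mod 3 < 3)%Z) by (apply Z.mod_pos_bound; lia).
  assert (ha4 : (0 <= a mod 4 < 4)%Z) by (apply Z.mod_pos_bound; lia).
  assert (hbd : b = (3 * l + b mod 3)%Z) by (apply Z.div_mod; lia).
  assert (had : a = (4 * k + a mod 4)%Z) by (apply Z.div_mod; lia).
  assert (hi' : Z.of_nat i' = (b mod 3 + 1)%Z) by (unfold i'; lia).
  assert (hsv : shares_vertical L j ((a0 - 1)%Z, b) (a0, (b + 1)%Z)).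
  { pose proof (hgt_pos j). pose proof mv_ge_300.
    assert (hw : wid (j - 1) = 4 * wid j)
      by (pose proof (wid_succ (j - 1)) as h; replace (j - 1 + 1)%Z with j in h by lia; lra).
    assert (hv : hgt j = hgt (j - 1) / mv L)
      by (pose proof (hgt_succ (j - 1)) as h; replace (j - 1 + 1)%Z with j in h by lia; lra).
    apply (shares_vertical_jump j (j - 1) k l i'); try lia.
    - unfold a0. rewrite plus_IZR, mult_IZR, INR_IZR_INZ, hw. field.
    - rewrite hv. ring.
    - rewrite <- hv, INR_IZR_INZ, hi'.
    replace (IZR b) with (IZR (3 * l + b mod 3)) by (f_equal; lia).
      rewrite !plus_IZR. right. ring.
    - rewrite <- hv, INR_IZR_INZ, hi'.
      replace (IZR (b + 1)) with (IZR (3 * l + b mod 3) + 1) by (rewrite <- plus_IZR; f_equal; lia).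
      rewrite !plus_IZR. right. ring. }
  replace 16%nat with (7 + (2 + 7))%nat by lia.
  apply gallery_within_trans with ((a0 - 1)%Z, b).
  { eapply gallery_within_mono; [apply gallery_within_row | unfold a0, i'; lia]. }
  apply gallery_within_trans with (a0, (b + 1)%Z); [apply shares_vertical_within; auto|].
  eapply gallery_within_mono; [apply gallery_within_row | unfold a0, i'; lia].
Qed.

Lemma gallery_within_column j a b b' :
  gallery_within j (a, b) (a, b') (16 * Z.to_nat (Z.abs (b' - b)) + 1).
Proof.
  assert (H : forall (d : nat) b, gallery_within j (a, b) (a, (b + Z.of_nat d)%Z) (16 * d + 1)).
  { induction d as [|d IH]; intro b0.
    - rewrite Z.add_0_r. apply gallery_within_refl.
    - replace (16 * S d + 1)%nat with ((16 * d + 1) + 16)%nat by lia.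
      apply gallery_within_trans with (a, (b0 + Z.of_nat d)%Z); auto.
      replace (b0 + Z.of_nat (S d))%Z with (b0 + Z.of_nat d + 1)%Z by lia. apply gallery_within_up.
      }
  destruct (Z_le_gt_dec b b').
  - replace b' with (b + Z.of_nat (Z.to_nat (Z.abs (b' - b))))%Z at 1 by lia. apply H.
  - apply gallery_within_sym.
  replace b with (b' + Z.of_nat (Z.to_nat (Z.abs (b' - b))))%Z at 1 by lia.
    apply H.
Qed.

Lemma gallery_within_cells j a b a' b' :
  gallery_within j (a, b) (a', b')
    (2 * Z.to_nat (Z.abs (a' - a)) + 1 + (16 * Z.to_nat (Z.abs (b' - b)) + 1)).
Proof. apply gallery_within_trans with (a', b); [apply gallery_within_row | apply gallery_within_column]. Qed.

Definition nat_up (r : R) : nat := Z.to_nat (up r).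

Definition cells_bound (X Y : R) : nat := (2 * nat_up X + 16 * nat_up Y + 2)%nat.

Lemma gallery_within_cells_bound j a b a' b' X Y :
  IZR (Z.abs (a' - a)) <= X -> IZR (Z.abs (b' - b)) <= Y ->
  gallery_within j (a, b) (a', b') (cells_bound X Y).
Proof.
  intros hx hy.
  assert (up_gt : forall z r, IZR z <= r -> (z < up r)%Z)
    by (intros z r h; destruct (archimed r) as [h1 _]; apply lt_IZR; lra).
  apply up_gt in hx, hy. eapply gallery_within_mono; [apply gallery_within_cells|].
  unfold cells_bound, nat_up. lia.
Qed.

Lemma cell2_coords j a b z : cell2 L j (a, b) z ->
  (IZR a <= fst z / wid j <= IZR a + 1) /\ (IZR b <= snd z / hgt j <= IZR b + 1).
Proof.
  unfold cell2; simpl. fold (wid j) (hgt j). rewrite !plus_IZR. intros [[h1 h2] [h3 h4]].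
  pose proof (wid_pos j). pose proof (hgt_pos j).
  split; split; [apply Rmult_le_reg_r with (wid j) | apply Rmult_le_reg_r with (wid j)
    | apply Rmult_le_reg_r with (hgt j) | apply Rmult_le_reg_r with (hgt j)]; auto; field_simplify; lra.
Qed.

Lemma cell2_index_close j a b a' b' z z' : cell2 L j (a, b) z -> cell2 L j (a', b') z' ->
  IZR (Z.abs (a' - a)) <= Rabs (fst z' - fst z) / wid j + 1 /\
  IZR (Z.abs (b' - b)) <= Rabs (snd z' - snd z) / hgt j + 1.
Proof.
  unfold cell2; simpl. fold (wid j) (hgt j). rewrite !plus_IZR. intros [hx hy] [hx' hy'].
  rewrite !abs_IZR, !minus_IZR. split; apply index_diff_le; auto using wid_pos, hgt_pos.
Qed.

Definition cell_at (j : Z) (z : pt) : Z * Z := (Zfloor (fst z / wid j), Zfloor (snd z / hgt j)).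

Lemma cell2_cell_at j z : cell2 L j (cell_at j z) z.
Proof.
  pose proof (wid_pos j). pose proof (hgt_pos j).
  destruct (Zfloor_bound (fst z / wid j)). destruct (Zfloor_bound (snd z / hgt j)).
  unfold cell2, cell_at; simpl. fold (wid j) (hgt j). rewrite !plus_IZR.
  assert (fst z = fst z / wid j * wid j) by (field; lra).
  assert (snd z = snd z / hgt j * hgt j) by (field; lra).
  split; split; nra.
Qed.

Lemma gallery_within_close_points j c c' z z' X Y :
  cell2 L j c z -> cell2 L j c' z' ->
  Rabs (fst z' - fst z) <= X * wid j -> Rabs (snd z' - snd z) <= Y * hgt j ->
  gallery_within j c c' (cells_bound (X + 1) (Y + 1)).
Proof.
  intros hc hc' hx hy. destruct c as [a b], c' as [a' b'].
  destruct (cell2_index_close j a b a' b' z z' hc hc') as [h1 h2].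
  pose proof (wid_pos j). pose proof (hgt_pos j).
  apply gallery_within_cells_bound.
  - assert (Rabs (fst z' - fst z) / wid j <= X)
    by (apply Rmult_le_reg_r with (wid j); auto; field_simplify; lra).
    lra.
  - assert (Rabs (snd z' - snd z) / hgt j <= Y)
    by (apply Rmult_le_reg_r with (hgt j); auto; field_simplify; lra).
    lra.
Qed.

Definition shift_up (t : R) (z : pt) : pt := (fst z, snd z + t).

Definition shift_step (t : R) (s : step) : step :=
  Step (lev s) (is_cell s) (shift_up t (src s)) (shift_up t (tgt s)).

(* A vertical translation by an integer multiple of [m_v^-n0] maps the cells and the
   identifications of every level [>= n0] to cells and identifications of the same level:
   at level [i] it is a translation by a multiple of [m_v^-i], and [R] is invariant
   under [y |-> y + 1] (which sends [a_{k,l,i}] to [a_{k,l+L,i}]). *)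
Lemma step_ok_shift n0 z s : (n0 <= lev s)%Z -> step_ok s -> step_ok (shift_step (IZR z * hgt n0) s).
Proof.
  intros hlev hok. pose proof (hgt_pos (lev s)). pose proof mv_ge_300.
  rewrite (hgt_pow n0 (lev s) hlev). set (E := (mvZ ^ (lev s - n0))%Z).
  unfold step_ok, shift_step in *; simpl. destruct (is_cell s).
  - destruct hok as (c & h1 & h2). exists (fst c, (snd c + z * E)%Z).
    unfold cell2, shift_up in *; simpl in *.
    change (powerRZ (mv L) (- lev s)) with (hgt (lev s)) in *.
    rewrite !plus_IZR, mult_IZR in *. split; split; lra.
  - destruct hok as (p0 & k & l & i' & (hi & hx & hy) & hab).
    exists (fst p0, snd p0 + IZR (z * E)), k, (l + z * E * Z.of_nat L)%Z, i'. split.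
    + split; auto. split; auto. cbn [fst snd].
      assert (e : IZR (3 * (l + z * E * Z.of_nat L)) = IZR (3 * l) + IZR (z * E) * mv L).
      { unfold mv. rewrite INR_IZR_INZ, <- !mult_IZR, <- plus_IZR. f_equal. ring. }
      rewrite e.
      assert (e1 : (IZR (3 * l) + IZR (z * E) * mv L + INR i' - 1) / mv L
                   = (IZR (3 * l) + INR i' - 1) / mv L + IZR (z * E)) by (field; lra).
      assert (e2 : (IZR (3 * l) + IZR (z * E) * mv L + INR i') / mv L
                   = (IZR (3 * l) + INR i') / mv L + IZR (z * E)) by (field; lra).
      rewrite e1, e2. lra.
    + unfold shift_up. rewrite mult_IZR.
      destruct hab as [[-> ->] | [-> ->]]; [left | right]; unfold Phi_pow; simpl; fold (wid (lev s)) (hgt (lev s));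
        split; f_equal; ring.
Qed.

Lemma chain_shift n0 z p l q : chain p l q -> Forall (fun s => (n0 <= lev s)%Z) l ->
  chain (shift_up (IZR z * hgt n0) p) (map (shift_step (IZR z * hgt n0)) l) (shift_up (IZR z * hgt n0) q) /\
  cost (map (shift_step (IZR z * hgt n0)) l) = cost l.
Proof.
  induction 1 as [p|p s l q <- hok _ IH]; intro hf; [split; [constructor | auto]|].
  inversion hf as [|? ? h1 h2]; subst. destruct (IH h2) as [c1 c2].
  split; simpl; [econstructor; [reflexivity | apply step_ok_shift; auto | exact c1] | now rewrite c2].
Qed.

Definition fine_or_jump (n0 : Z) (J : R) (s : step) : Prop :=
  (n0 <= lev s)%Z \/
  (is_cell s = false /\ fst (tgt s) = fst (src s) /\
   (snd (tgt s) = snd (src s) + J \/ snd (tgt s) = snd (src s) - J)).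

(* Each free vertical jump by [S0 m_v^-n0] is undone by translating the rest of
   the chain back by the same amount. *)
Lemma chain_remove_jumps n0 (S0 : Z) p l q : chain p l q ->
  Forall (fine_or_jump n0 (IZR S0 * hgt n0)) l ->
  exists l' (N : Z), chain p l' (fst q, snd q - IZR N * (IZR S0 * hgt n0)) /\ cost l' = cost l /\
    Forall (fun s => (n0 <= lev s)%Z) l'.
Proof.
  induction 1 as [p|p s l q <- hok hch IH]; intro hf.
  - exists nil, 0%Z. split; [|split; auto].
    replace (fst p, snd p - IZR 0 * (IZR S0 * hgt n0)) with p by (destruct p; simpl; f_equal; ring).
    constructor.
  - inversion hf as [|? ? h1 h2]; subst. destruct (IH h2) as (l' & N & c1 & c2 & c3).
    destruct h1 as [hfine | (hc & hx & hy)].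
    + exists (s :: l'), N.
    split; [econstructor; eauto | split; [simpl; rewrite c2; auto | constructor; auto]].
    + assert (hs : exists e : Z, snd (tgt s) = snd (src s) + IZR e * (IZR S0 * hgt n0))
        by (destruct hy as [hy | hy]; [exists 1%Z | exists (-1)%Z]; rewrite hy; simpl; ring).
      destruct hs as [e he].
      destruct (chain_shift n0 (- (e * S0)) _ _ _ c1 c3) as [d1 d2].
      exists (map (shift_step (IZR (- (e * S0)) * hgt n0)) l'), (N + e)%Z. split; [|split].
      * replace (src s) with (shift_up (IZR (- (e * S0)) * hgt n0) (tgt s)).
        -- replace (fst q, snd q - IZR (N + e) * (IZR S0 * hgt n0)) with
             (shift_up (IZR (- (e * S0)) * hgt n0) (fst q, snd q - IZR N * (IZR S0 * hgt n0))).
           ++ exact d1.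
           ++ unfold shift_up; simpl. rewrite opp_IZR, mult_IZR, plus_IZR. f_equal; ring.
        -- unfold shift_up. rewrite he, hx, opp_IZR, mult_IZR.
        destruct (src s); simpl; f_equal; ring.
      * rewrite d2, c2. simpl. rewrite hc. ring.
      * apply Forall_map. exact c3.
Qed.

Lemma fine_chain_y_small n0 p l q : chain p l q -> Forall (fun s => (n0 <= lev s)%Z) l ->
  cost l <= wid n0 / 16 -> Rabs (snd q - snd p) <= hgt n0 / 7.
Proof.
  intros hc hf hcl. pose proof (chain_y_displacement n0 p l q hc hf) as h. unfold y_bound in h.
  pose proof (hgt_pos n0). pose proof (wid_pos n0). pose proof mv_ge_300.
  pose proof (cost_nonneg l).
  assert (hgt n0 / wid n0 * cost l <= hgt n0 / 16).
  { apply Rmult_le_reg_r with (wid n0); auto.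
    replace (hgt n0 / wid n0 * cost l * wid n0) with (hgt n0 * cost l) by (field; lra).
    replace (hgt n0 / 16 * wid n0) with (hgt n0 * (wid n0 / 16)) by field.
    apply Rmult_le_compat_l; lra. }
  assert (3 * hgt n0 / mv L <= hgt n0 / 100)
    by (apply Rmult_le_reg_r with (mv L); [lra | field_simplify; nra]).
  lra.
Qed.

(* A cheap chain cannot use a cell of level [< n0]; and after a gluing along [a_{k,lb,i'}]
   at a level [i < n0], its fine parts move it less than the distance to any other line
   glued at a level [< n0], and less than a vertical unit of level [i]: so every coarse
   step glues along the same [a_{k,lb,i'}]. *)
Lemma coarse_steps_glue_along n0 i k lb (i' : nat) : (i < n0)%Z -> (1 <= i' <= 3)%nat ->
  forall z l q, chain z l q -> cost l <= wid n0 / 16 -> near_a i k lb i' z ->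
  Forall (fun s => ~ (n0 <= lev s)%Z -> glues_along i k lb i' s) l.
Proof.
  intros hi hi' z l. revert z.
  induction l as [l IH] using (well_founded_induction (well_founded_ltof _ (@length step))).
  intros z q hch hcost hreg.
  destruct (split_first (fun s => ~ (n0 <= lev s)%Z) l) as [allf | (a & g & b & -> & fa & pg)].
  { rewrite Forall_forall in *. intros x hx hn. exfalso. exact (allf x hx hn). }
  assert (hfa : Forall (fun s => (n0 <= lev s)%Z) a)
    by (eapply Forall_impl; [|exact fa]; simpl; intros; lia).
  apply chain_app_inv in hch as (r & ha & hgb).
  inversion hgb as [|? ? ? ? <- hok hb]; subst.
  rewrite cost_app in hcost. simpl in hcost.
  pose proof (cost_nonneg a). pose proof (cost_nonneg b). pose proof (wid_pos n0).
  assert (hcl : is_cell g = false).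
  { destruct (is_cell g); auto. pose proof (wid_antitone (lev g) n0 ltac:(lia)). lra. }
  rewrite hcl in hcost. unfold step_ok in hok. rewrite hcl in hok.
  destruct (glued_near_a _ _ _ hok) as (k2 & l2 & i2 & hi2 & hra & hrb & _).
  assert (hdx : Rabs (fst (src g) - fst z) < wid n0)
    by (pose proof (chain_x_displacement _ _ _ ha); lra).
  assert (hdy : Rabs (snd (src g) - snd z) <= hgt n0 / 7)
    by (apply (fine_chain_y_small n0 z a); auto; lra).
  destruct hreg as [hzx hzy]. destruct hra as [hrx hry].
  rewrite hzx, hrx in hdx.
  destruct (coarse_columns_eq n0 i (lev g) k k2 i' i2 hi ltac:(lia) hi' hi2 hdx) as (ei & <- & <-).
  assert (el : lb = l2).
  { apply NNPP. intro hne. rewrite <- ei in hrx, hry.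
    destruct (near_a_separated i k lb i' k l2 i' z (src g) hi' hi' (conj hzx hzy) (conj hrx hry)
                ltac:(intuition)) as [h | h].
    - rewrite hrx, hzx, Rminus_diag, Rabs_R0 in h. pose proof (wid_pos i). lra.
    - pose proof (hgt_succ i). pose proof (hgt_antitone (i + 1) n0 ltac:(lia)).
    pose proof (hgt_pos n0). lra. }
  subst l2. rewrite <- ei in *.
  apply Forall_app. split.
  - eapply Forall_impl; [|exact hfa]. simpl. intros x hx hn. contradiction.
  - constructor.
    + intros _. split; [auto | split; [auto | split; [split | ]]]; auto.
    + apply (IH b) with (tgt g) q; auto; [unfold ltof; rewrite length_app; simpl; lia | lra].
Qed.

Definition jump_gallery_bound (D : R) : nat := (3 * cells_bound 2 (2 * D + 4) + 4)%nat.

(* Galleries in the two columns [a0 - 1], [a0] of [Y_j] on either side of a line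
   [Phi^i(a_{k,l,i'})]: the gluings along it give [J] jumps [(a0 - 1, r) -> (a0, r + J)],
   [b0 <= r < b0 + J]. Heights [ya], [yb] are measured in rows. *)
Section JumpColumns.

Variables (j a0 J b0 : Z) (D ya yb : R) (aa ba ab bb : Z).
Hypothesis J_ge_1 : (1 <= J)%Z.
Hypothesis D_nonneg : 0 <= D.
Hypothesis D_le_half : D <= IZR J / 2.
Hypothesis jumps : forall r, (b0 <= r <= b0 + J - 1)%Z ->
  shares_vertical L j ((a0 - 1)%Z, r) (a0, (r + J)%Z).
Hypothesis aa_beside : (aa = a0 - 1 \/ aa = a0)%Z.
Hypothesis ab_beside : (ab = a0 - 1 \/ ab = a0)%Z.
Hypothesis ya_range : IZR b0 <= ya <= IZR b0 + 2 * IZR J.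
Hypothesis yb_range : IZR b0 <= yb <= IZR b0 + 2 * IZR J.
Hypothesis ya_row : IZR ba <= ya <= IZR ba + 1.
Hypothesis yb_row : IZR bb <= yb <= IZR bb + 1.

Lemma gallery_within_beside x y b b' : (x = a0 - 1 \/ x = a0)%Z -> (y = a0 - 1 \/ y = a0)%Z ->
  - (2 * D + 4) <= IZR (b' - b) <= 2 * D + 4 ->
  gallery_within j (x, b) (y, b') (cells_bound 2 (2 * D + 4)).
Proof.
  intros hx hy hb. apply gallery_within_cells_bound; rewrite abs_IZR; apply Rabs_le; auto.
  rewrite minus_IZR. destruct hx as [-> | ->], hy as [-> | ->]; rewrite ?minus_IZR; lra.
Qed.

Lemma gallery_within_no_jump : Rabs (yb - ya) <= D ->
  gallery_within j (aa, ba) (ab, bb) (jump_gallery_bound D).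
Proof.
  intro hN. apply Rabs_le_inv in hN.
  eapply gallery_within_mono; [apply gallery_within_beside; auto|]; [rewrite minus_IZR; lra|].
  unfold jump_gallery_bound. lia.
Qed.

Lemma gallery_within_one_jump : Rabs (yb - ya - IZR J) <= D ->
  gallery_within j (aa, ba) (ab, bb) (jump_gallery_bound D).
Proof.
  intro hN. apply Rabs_le_inv in hN.
  set (r := Z.max b0 (Z.min ba (b0 + J - 1))).
  assert (hr : (b0 <= r <= b0 + J - 1)%Z) by (unfold r; lia).
  assert (hr2 : ((r = b0 /\ ba < b0) \/ r = ba \/ (r = b0 + J - 1 /\ b0 + J - 1 < ba))%Z)
    by (unfold r; lia).
  assert (hlow : (ba < b0)%Z -> IZR ba <= IZR b0 - 1)
    by (intro h; rewrite <- minus_IZR; apply IZR_le; lia).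
  assert (hhigh : (b0 + J - 1 < ba)%Z -> IZR b0 + IZR J <= IZR ba)
    by (intro h; rewrite <- plus_IZR; apply IZR_le; lia).
  unfold jump_gallery_bound.
  replace (3 * cells_bound 2 (2 * D + 4) + 4)%nat
    with (cells_bound 2 (2 * D + 4) + (2 + (cells_bound 2 (2 * D + 4) + cells_bound 2 (2 * D + 4) + 2)))%nat
    by lia.
  apply gallery_within_trans with ((a0 - 1)%Z, r).
  { apply gallery_within_beside; auto.
    destruct hr2 as [[-> h] | [-> | [-> h]]]; repeat (rewrite minus_IZR || rewrite plus_IZR);
      [specialize (hlow h) | | specialize (hhigh h)]; lra. }
  apply gallery_within_trans with (a0, (r + J)%Z); [apply shares_vertical_within, jumps; auto|].
  eapply gallery_within_mono; [apply gallery_within_beside; auto| lia].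
  destruct hr2 as [[-> h] | [-> | [-> h]]]; repeat (rewrite minus_IZR || rewrite plus_IZR);
    [specialize (hlow h) | | specialize (hhigh h)]; lra.
Qed.

Lemma gallery_within_two_jumps : Rabs (yb - ya - 2 * IZR J) <= D ->
  gallery_within j (aa, ba) (ab, bb) (jump_gallery_bound D).
Proof.
  intro hN. apply Rabs_le_inv in hN.
  assert (1 <= IZR J) by (apply IZR_le; lia).
  unfold jump_gallery_bound.
  replace (3 * cells_bound 2 (2 * D + 4) + 4)%nat
    with (cells_bound 2 (2 * D + 4) + (2 + (cells_bound 2 (2 * D + 4) + (2 + cells_bound 2 (2 * D + 4)))))%nat
    by lia.
  apply gallery_within_trans with ((a0 - 1)%Z, b0).
  { apply gallery_within_beside; auto. rewrite minus_IZR. lra. }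
  apply gallery_within_trans with (a0, (b0 + J)%Z); [apply shares_vertical_within, jumps; lia|].
  apply gallery_within_trans with ((a0 - 1)%Z, (b0 + J - 1)%Z).
  { apply gallery_within_beside; auto. repeat (rewrite minus_IZR || rewrite plus_IZR). lra. }
  apply gallery_within_trans with (a0, (b0 + J - 1 + J)%Z); [apply shares_vertical_within, jumps; lia|].
  apply gallery_within_beside; auto. repeat (rewrite minus_IZR || rewrite plus_IZR). lra.
Qed.

Lemma gallery_within_across_jumps (N : Z) : (0 <= N)%Z -> Rabs (yb - ya - IZR N * IZR J) <= D ->
  gallery_within j (aa, ba) (ab, bb) (jump_gallery_bound D).
Proof.
  intros hN0 hN. pose proof (Rabs_le_inv _ _ hN).
  assert (1 <= IZR J) by (apply IZR_le; lia).
  assert (hN3 : (N < 3)%Z) by (apply lt_IZR; apply Rmult_lt_reg_r with (IZR J); lra).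
  assert (hN012 : (N = 0 \/ N = 1 \/ N = 2)%Z) by lia.
  destruct hN012 as [-> | [-> | ->]].
  - apply gallery_within_no_jump. rewrite Rmult_0_l, Rminus_0_r in hN. auto.
  - apply gallery_within_one_jump. rewrite Rmult_1_l in hN. auto.
  - apply gallery_within_two_jumps. auto.
Qed.

End JumpColumns.

Lemma gallery_within_across_jumps_R j a0 J b0 D (N : Z) za zb ca cb :
  (1 <= J)%Z -> 0 <= D -> D <= IZR J * hgt j / 2 ->
  (forall r, (b0 <= r <= b0 + J - 1)%Z -> shares_vertical L j ((a0 - 1)%Z, r) (a0, (r + J)%Z)) ->
  fst za = IZR a0 * wid j -> fst zb = IZR a0 * wid j ->
  IZR b0 * hgt j <= snd za <= (IZR b0 + 2 * IZR J) * hgt j ->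
  IZR b0 * hgt j <= snd zb <= (IZR b0 + 2 * IZR J) * hgt j ->
  Rabs (snd zb - snd za - IZR N * (IZR J * hgt j)) <= D ->
  cell2 L j ca za -> cell2 L j cb zb -> gallery_within j ca cb (jump_gallery_bound (D / hgt j)).
Proof.
  intros hS hD hDJ hjump hxa hxb hya hyb hN hca hcb.
  pose proof (wid_pos j) as hw. pose proof (hgt_pos j) as hv. set (V := hgt j) in *.
  destruct ca as [aa ba], cb as [ab bb].
  destruct (cell2_coords _ _ _ _ hca) as [hxa' hya'].
  destruct (cell2_coords _ _ _ _ hcb) as [hxb' hyb'].
  fold V in hya', hyb'. rewrite hxa in hxa'. rewrite hxb in hxb'.
  replace (IZR a0 * wid j / wid j) with (IZR a0) in hxa', hxb' by (field; lra).
  assert (beside : forall a, IZR a0 <= IZR a + 1 -> IZR a <= IZR a0 -> (a = a0 - 1 \/ a = a0)%Z).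
  { intros a h1 h2. rewrite <- plus_IZR in h1. apply le_IZR in h1, h2. lia. }
  assert (hdiv : forall y, IZR b0 * V <= y <= (IZR b0 + 2 * IZR J) * V ->
                   IZR b0 <= y / V <= IZR b0 + 2 * IZR J)
    by (intros y [h1 h2]; split; apply Rmult_le_reg_r with V; auto; field_simplify; lra).
  assert (hN' : Rabs (snd zb / V - snd za / V - IZR N * IZR J) <= D / V).
  { replace (snd zb / V - snd za / V - IZR N * IZR J) with ((snd zb - snd za - IZR N * (IZR J * V)) / V)
      by (field; lra).
    unfold Rdiv.
    rewrite Rabs_mult, (Rabs_right (/ V)) by (apply Rle_ge, Rlt_le, Rinv_0_lt_compat; lra).
    apply Rmult_le_compat_r; [apply Rlt_le, Rinv_0_lt_compat; lra | auto]. }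
  assert (hD0 : 0 <= D / V) by (apply Rmult_le_pos; [lra | apply Rlt_le, Rinv_0_lt_compat; lra]).
  assert (hDJ' : D / V <= IZR J / 2) by (apply Rmult_le_reg_r with V; auto; field_simplify; lra).
  destruct (Z_le_gt_dec 0 N).
  - apply (gallery_within_across_jumps j a0 J b0 (D / V) (snd za / V) (snd zb / V)) with N;
      try apply beside; try apply hdiv; try lra; auto.
  - apply gallery_within_sym.
    apply (gallery_within_across_jumps j a0 J b0 (D / V) (snd zb / V) (snd za / V)) with (- N)%Z;
      try apply beside; try apply hdiv; try lra; auto; [lia|].
    rewrite opp_IZR.
    replace (snd za / V - snd zb / V - - IZR N * IZR J) with (- (snd zb / V - snd za / V - IZR N * IZR J))
      by ring.
    rewrite Rabs_Ropp. auto.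
Qed.

Lemma glued_steps_fine_or_jump n0 i k lb (i' : nat) za l zb : chain za l zb ->
  Forall (fun s => (n0 <= lev s)%Z \/ glues_along i k lb i' s) l ->
  Forall (fine_or_jump n0 (hgt i / mv L)) l.
Proof.
  intros hch hsteps. pose proof (chain_steps_ok _ _ _ hch) as hok.
  rewrite Forall_forall in *. intros x hx.
  destruct (hsteps x hx) as [hf | (hlx & hcx & _)]; [left; auto | right].
  pose proof (hok x hx) as hokx. unfold step_ok in hokx. rewrite hcx in hokx.
  destruct (glued_near_a _ _ _ hokx) as (_ & _ & _ & _ & _ & _ & hyx).
  split; [auto | split; [apply (glued_x _ _ _ hokx) |]]. rewrite <- hlx. exact hyx.
Qed.

Lemma cheap_chain_coarse_step_glue n0 s l :
  In s l -> (lev s < n0)%Z -> cost l <= wid n0 / 16 -> is_cell s = false.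
Proof.
  intros hin hlev hcost. destruct (is_cell s) eqn:ec; auto.
  pose proof (cost_ge_cell_step s l hin ec). pose proof (wid_antitone (lev s) n0 ltac:(lia)).
  pose proof (wid_pos n0). lra.
Qed.

(* Between two visits of a neighbourhood of [Phi^i(a_{k,lb,i'})], a cheap chain whose
   coarse steps are all gluings along it moves vertically by a multiple of the jump
   [m_v^-(i+1)], up to [m_v^-n0 / 7]; the jumps of the two columns of [Y_j] adjacent
   to that line realise the same motion. *)
Lemma gallery_within_glued_segment j n0 i k lb (i' : nat) za l zb :
  (i < n0)%Z -> (n0 <= j)%Z -> (1 <= i' <= 3)%nat ->
  chain za l zb -> Forall (fun s => (n0 <= lev s)%Z \/ glues_along i k lb i' s) l ->
  cost l <= wid n0 / 16 -> near_a i k lb i' za -> near_a i k lb i' zb ->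
  gallery_within j (cell_at j za) (cell_at j zb) (jump_gallery_bound (hgt n0 / 7 / hgt j)).
Proof.
  intros hi hj hi' hch hsteps hcost hza hzb.
  pose proof (hgt_pos j). pose proof (hgt_pos n0).
  set (S0 := (mvZ ^ (n0 - (i + 1)))%Z).
  assert (hS0 : IZR S0 * hgt n0 = hgt i / mv L)
    by (rewrite <- hgt_succ; symmetry; apply hgt_pow; lia).
  pose proof (glued_steps_fine_or_jump n0 i k lb i' _ _ _ hch hsteps) as hUF. rewrite <- hS0 in hUF.
  destruct (chain_remove_jumps n0 S0 _ _ _ hch hUF) as (l' & N & hl' & hcl' & hfl').
  pose proof (fine_chain_y_small n0 _ _ _ hl' hfl' ltac:(lra)) as hyN. simpl in hyN.
  set (J := (mvZ ^ (j - i - 1))%Z).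
  set (a0 := ((4 * k + Z.of_nat i') * 4 ^ (j - i - 1))%Z).
  set (b0 := ((3 * lb + Z.of_nat i' - 1) * J)%Z).
  assert (hJ1 : (1 <= J)%Z)
    by (pose proof (Z.pow_pos_nonneg mvZ (j - i - 1)); unfold J, mvZ in *; lia).
  assert (hJV : IZR J * hgt j = hgt i / mv L).
  { rewrite <- hgt_succ. unfold J. replace (j - i - 1)%Z with (j - (i + 1))%Z by lia.
    symmetry. apply hgt_pow. lia. }
  assert (ha0 : IZR a0 * wid j = (IZR k + INR i' / 4) * wid i)
    by (symmetry; apply coarse_column_scaled; lia).
  assert (hb0 : IZR b0 = (IZR (3 * lb) + INR i' - 1) * IZR J)
    by (unfold b0; rewrite mult_IZR, minus_IZR, plus_IZR, INR_IZR_INZ; reflexivity).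
  assert (hreg : forall z, near_a i k lb i' z ->
            fst z = IZR a0 * wid j /\ IZR b0 * hgt j <= snd z <= (IZR b0 + 2 * IZR J) * hgt j).
  { intros z [hzx [hzy1 hzy2]]. rewrite <- hJV in hzy1, hzy2. rewrite hb0, ha0. split; [auto | split; nra]. }
  destruct (hreg _ hza) as [hxa hya]. destruct (hreg _ hzb) as [hxb hyb].
  pose proof (hgt_antitone (i + 1) n0 ltac:(lia)) as hmono. rewrite hgt_succ in hmono.
  apply (gallery_within_across_jumps_R j a0 J b0 (hgt n0 / 7) N za zb); auto; try lra;
    try apply cell2_cell_at.
  - intros r hr. apply (shares_vertical_jump j i k lb i' a0 r J); auto; try lia.
    + rewrite <- hJV. replace ((IZR (3 * lb) + INR i' - 1) * (IZR J * hgt j)) with (IZR b0 * hgt j)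
        by (rewrite hb0; ring).
      apply Rmult_le_compat_r; [lra | apply IZR_le; lia].
    + rewrite <- hJV.
    replace ((IZR (3 * lb) + INR i') * (IZR J * hgt j)) with (IZR (b0 + J) * hgt j)
        by (rewrite plus_IZR, hb0; ring).
      apply Rmult_le_compat_r; [lra | apply IZR_le; lia].
  - rewrite hJV, <- hS0.
    replace (snd zb - snd za - IZR N * (IZR S0 * hgt n0))
      with (snd zb - IZR N * (IZR S0 * hgt n0) - snd za) by ring.
    exact hyN.
Qed.

Lemma gallery_within_fine_piece j n0 K P c c' z l z' :
  hgt n0 = P * hgt j -> cell2 L j c z -> cell2 L j c' z' -> chain z l z' ->
  Forall (fun s => (n0 <= lev s)%Z) l -> cost l <= K * wid j -> cost l <= wid n0 / 16 ->
  gallery_within j c c' (cells_bound (K + 1) (P / 7 + 1)).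
Proof.
  intros hP hc hc' hch hf hK hn0.
  apply gallery_within_close_points with z z'; auto.
  - pose proof (chain_x_displacement _ _ _ hch). lra.
  - pose proof (fine_chain_y_small _ _ _ _ hch hf hn0). rewrite hP in *. lra.
Qed.

Lemma gallery_within_from_coarse_glue j n0 K P s1 g1 rest q :
  (n0 <= j)%Z -> hgt n0 = P * hgt j -> cell2 L j s1 q -> chain (src g1) (g1 :: rest) q ->
  (lev g1 < n0)%Z -> is_cell g1 = false ->
  cost (g1 :: rest) <= K * wid j -> cost (g1 :: rest) <= wid n0 / 16 ->
  gallery_within j (cell_at j (src g1)) s1 (jump_gallery_bound (P / 7) + cells_bound (K + 1) (P / 7 + 1)).
Proof.
  intros hj hP hq hrest hlev hgc hK hn0.
  pose proof (hgt_pos j).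
  inversion hrest as [|? ? ? ? _ hok _]; subst.
  unfold step_ok in hok. rewrite hgc in hok.
  destruct (glued_near_a _ _ _ hok) as (k & lb & i' & hi' & hsrc & _ & _).
  pose proof (coarse_steps_glue_along n0 (lev g1) k lb i' hlev hi' _ _ _ hrest hn0 hsrc) as hglue.
  destruct (split_last (fun s => ~ (n0 <= lev s)%Z) (g1 :: rest)) as (mid & g2 & ch3 & e2 & hg2 & f3).
  { exists g1. split; [left | ]; auto. lia. }
  rewrite e2 in hrest. apply chain_app_inv in hrest as (z2 & hmid & hg2rest).
  inversion hg2rest as [|? ? ? ? <- hok2 hch3]; subst.
  assert (hcl : cost (g1 :: rest) = cost (mid ++ g2 :: nil) + cost ch3)
    by (rewrite e2, !cost_app; simpl; ring).
  pose proof (cost_nonneg (mid ++ g2 :: nil)). pose proof (cost_nonneg ch3).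
  rewrite e2 in hglue. apply Forall_app in hglue as [hglue_mid hglue_g2].
  destruct (Forall_inv hglue_g2 hg2) as (_ & _ & _ & htgt).
  assert (hseg : Forall (fun s => (n0 <= lev s)%Z \/ glues_along (lev g1) k lb i' s) (mid ++ g2 :: nil)).
  { apply Forall_app. split; [|constructor; [right; apply (Forall_inv hglue_g2); auto | constructor]].
    eapply Forall_impl; [|exact hglue_mid]. intros x hx.
    destruct (Z_le_dec n0 (lev x)); [left | right; apply hx]; auto. }
  pose proof (gallery_within_glued_segment j n0 (lev g1) k lb i' _ _ _ hlev hj hi'
                (chain_app _ _ _ _ _ hmid (chain_cons _ _ _ _ eq_refl hok2 (chain_nil _)))
                hseg ltac:(lra) hsrc htgt) as hmiddle.
  replace (hgt n0 / 7 / hgt j) with (P / 7) in hmiddle by (rewrite hP; field; lra).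
  apply gallery_within_trans with (cell_at j (tgt g2)); auto.
  apply (gallery_within_fine_piece j n0 K P _ _ (tgt g2) ch3 q); auto using cell2_cell_at; try lra.
  eapply Forall_impl; [|exact f3]. simpl. intros. lia.
Qed.

Lemma gallery_within_of_cheap_chain j n0 K P s0 s1 p l q :
  (n0 <= j)%Z -> hgt n0 = P * hgt j ->
  cell2 L j s0 p -> cell2 L j s1 q -> chain p l q ->
  cost l <= K * wid j -> cost l <= wid n0 / 16 ->
  gallery_within j s0 s1
    (cells_bound (K + 1) (P / 7 + 1) + (jump_gallery_bound (P / 7) + cells_bound (K + 1) (P / 7 + 1))).
Proof.
  intros hj hP hp hq hch hK hn0.
  destruct (split_first (fun s => ~ (n0 <= lev s)%Z) l) as [allf | (ch1 & g1 & rest & e & f1 & hg1)].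
  { eapply gallery_within_mono; [apply (gallery_within_fine_piece j n0 K P _ _ p l q); auto | lia].
    eapply Forall_impl; [|exact allf]. simpl. intros. lia. }
  assert (hc : cost l = cost ch1 + cost (g1 :: rest)) by (rewrite e, cost_app; auto).
  pose proof (cost_nonneg ch1). pose proof (cost_nonneg (g1 :: rest)).
  assert (hgc : is_cell g1 = false)
    by (apply (cheap_chain_coarse_step_glue n0 g1 l); [rewrite e; apply in_or_app; simpl | lia |]; auto).
  rewrite e in hch. apply chain_app_inv in hch as (z1 & hch1 & hrest).
  inversion hrest as [|? ? ? ? <- _ _]; subst.
  apply gallery_within_trans with (cell_at j (src g1)).
  - apply (gallery_within_fine_piece j n0 K P _ _ p ch1 (src g1)); auto using cell2_cell_at; try lra.
    eapply Forall_impl; [|exact f1]. simpl. intros. lia.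
  - apply (gallery_within_from_coarse_glue j n0 K P s1 g1 rest q); auto; [lia | lra | lra].
Qed.

End LargeL.

End Construction.

Theorem mainTheorem15 :
  forall (L : nat), (100 <= L)%nat ->
  forall d : pt -> pt -> R, largest_admissible L d ->
  forall C : R, 0 < C ->
  exists N : nat,
    forall (j : Z) (s0 s1 : Z * Z),
      set_dist_le d (cell2 L j s0) (cell2 L j s1) (C * powerRZ mh (- j)) ->
      exists g : list (Z * Z),
        horizontal_gallery L j g /\ (length g <= N)%nat /\
        nth 0 g (0%Z, 0%Z) = s0 /\ last g (0%Z, 0%Z) = s1.
Proof.
  intros L hL d hd C hC.
  set (K := C + 1).
  set (T := Z.to_nat (up (16 * K))).
  assert (hT : 16 * K <= 4 ^ T).
  { destruct (archimed (16 * K)) as [h _].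
    assert (INR T = IZR (up (16 * K)))
      by (unfold T; rewrite INR_IZR_INZ, Z2Nat.id; [auto | apply le_IZR; unfold K in *; lra]).
    pose proof (poly T 3 ltac:(lra)). pose proof (pos_INR T). replace (1 + 3) with 4 in * by ring.
    lra. }
  set (P := mv L ^ T).
  exists (cells_bound (K + 1) (P / 7 + 1) + (jump_gallery_bound (P / 7) + cells_bound (K + 1) (P / 7 + 1)))%nat.
  intros j s0 s1 hclose.
  destruct (cheap_chain_of_close_cells L d j s0 s1 C hd hC hclose) as (p & q & l & hp & hq & hch & hcost).
  set (n0 := (j - Z.of_nat T)%Z).
  assert (hw : wid n0 = 4 ^ T * wid j) by (rewrite (wid_shift n0 T); unfold n0; do 2 f_equal; lia).
  assert (hv : hgt L n0 = P * hgt L j)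
    by (rewrite (hgt_shift L hL n0 T); unfold n0; do 2 f_equal; lia).
  assert (16 * K * wid j <= wid n0)
    by (rewrite hw; apply Rmult_le_compat_r; [apply Rlt_le, wid_pos | lra]).
  fold K in hcost.
  destruct (gallery_within_of_cheap_chain L hL j n0 K P s0 s1 p l q ltac:(lia) hv hp hq hch
              ltac:(lra) ltac:(lra)) as (n & hg & hn).
  destruct (gallery_horizontal L j s0 s1 n hg) as (g & hgal & hlen & h0 & hlast).
  exists g. split; [auto | split; [lia | auto]].
Qed.
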